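(* For the submodule $M=[(z-w)^2]$ of $H^2(\mathbb D^2)$, the eigenvalues of the core operator $C$ of $M$ are exactly \[ 0,\quad 1,\quad \pm\frac{2}{n+2}\ \ (n\ge1). \] In particular the second largest eigenvalue of $C$ is $2/3$.
   Context: $H^2(\mathbb D^2)$ is the Hardy space on the unit bidisk with reproducing kernel $K(\lambda,z)=\frac{1}{(1-\overline{\lambda_1}z_1)(1-\overline{\lambda_2}z_2)}$. A submodule $M$ is a closed subspace invariant under multiplication by both coordinate functions; $[q]$ is the smallest submodule containing $q$. If $K^M$ is the reproducing kernel of $M$, the core function is $G^M(\lambda,z)=K^M(\lambda,z)/K(\lambda,z)$ and the core operator $C$ on $H^2(\mathbb D^2)$ is $(Cf)(z)=\int_{\mathbb T^2}G^M(\lambda,z)f(\lambda)\,dm(\lambda)$, $m$ the normalized Lebesgue measure on $\mathbb T^2$; equivalently $C=I-R_1R_1^*-R_2R_2^*+R_1R_2R_1^*R_2^*$ on $M$ and $C=0$ on $M^\perp$, where $R_1,R_2$ are multiplication by $z,w$ restricted to $M$. *)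

From Stdlib Require Import Reals ClassicalEpsilon.
From Coquelicot Require Import Coquelicot.

Open Scope R_scope.

(** H^2(D^2) is identified (isometrically) with the space of square-summable
    double coefficient sequences: f(z,w) = sum_{i,j} a i j z^i w^j. *)
Definition seq2 := nat -> nat -> C.

Definition s2zero : seq2 := fun _ _ => RtoC 0.
Definition s2add (a b : seq2) : seq2 := fun i j => Cplus (a i j) (b i j).
Definition s2opp (a : seq2) : seq2 := fun i j => Copp (a i j).
Definition s2sub (a b : seq2) : seq2 := s2add a (s2opp b).
Definition s2scal (c : C) (a : seq2) : seq2 := fun i j => Cmult c (a i j).

Definition sqsum (N : nat) (a : seq2) : R :=
  sum_n (fun i => sum_n (fun j => (Cmod (a i j))^2) N) N.

Definition inH2 (a : seq2) : Prop := exists B : R, forall N, sqsum N a <= B.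

Definition ip_psum (N : nat) (a b : seq2) : C :=
  sum_n (fun i => sum_n (fun j => Cmult (a i j) (Cconj (b i j))) N) N.
Definition ip (a b : seq2) : C :=
  (real (Lim_seq (fun N => Re (ip_psum N a b))),
   real (Lim_seq (fun N => Im (ip_psum N a b)))).
Definition nrm (a : seq2) : R := sqrt (Re (ip a a)).

Definition Sz (a : seq2) : seq2 := fun i j => match i with O => RtoC 0 | S i' => a i' j end.
Definition Sw (a : seq2) : seq2 := fun i j => match j with O => RtoC 0 | S j' => a i j' end.
Definition Szadj (a : seq2) : seq2 := fun i j => a (S i) j.
Definition Swadj (a : seq2) : seq2 := fun i j => a i (S j).

Definition submodule (M : seq2 -> Prop) : Prop :=
  (forall f, M f -> inH2 f) /\
  M s2zero /\
  (forall f g, M f -> M g -> M (s2add f g)) /\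
  (forall c f, M f -> M (s2scal c f)) /\
  (forall f, inH2 f ->
     (forall eps, 0 < eps -> exists g, M g /\ nrm (s2sub f g) < eps) -> M f) /\
  (forall f, M f -> M (Sz f)) /\
  (forall f, M f -> M (Sw f)).

Definition gen_submodule (q : seq2) (f : seq2) : Prop :=
  forall M, submodule M -> M q -> M f.

(** q = (z - w)^2 = z^2 - 2 z w + w^2 *)
Definition zmw2 : seq2 := fun i j =>
  match i, j with
  | 2, 0 => RtoC 1
  | 1, 1 => RtoC (-2)
  | 0, 2 => RtoC 1
  | _, _ => RtoC 0
  end.

Definition is_proj (M : seq2 -> Prop) (f g : seq2) : Prop :=
  M g /\ forall h, M h -> ip (s2sub f g) h = RtoC 0.
Definition proj (M : seq2 -> Prop) (f : seq2) : seq2 :=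
  epsilon (inhabits s2zero) (is_proj M f).

(** core operator: on M, C = I - R1 R1^* - R2 R2^* + R1 R2 R1^* R2^*
    with R1 = Sz|_M, R2 = Sw|_M (so Ri^* = P_M Si^* on M); C = 0 on M^perp.
    Hence C f = C (P_M f). *)
Definition core_on_M (M : seq2 -> Prop) (g : seq2) : seq2 :=
  s2add
    (s2sub (s2sub g (Sz (proj M (Szadj g)))) (Sw (proj M (Swadj g))))
    (Sz (Sw (proj M (Szadj (proj M (Swadj g)))))).
Definition core_op (M : seq2 -> Prop) (f : seq2) : seq2 :=
  core_on_M M (proj M f).

Definition eigenvalue (T : seq2 -> seq2) (lam : C) : Prop :=
  exists f, inH2 f /\ f <> s2zero /\ T f = s2scal lam f.

From Stdlib Require Import Reals Psatz Lra Lia FunctionalExtensionality ClassicalEpsilon.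
From Coquelicot Require Import Coquelicot.

(* A function f = Σ f_ij z^i w^j lies in M = [(z-w)^2] exactly when every homogeneous
   component f_d vanishes to second order on the diagonal z = w, i.e.
   Σ_i f_(i,d-i) = Σ_i i f_(i,d-i) = 0: these conditions cut out a closed submodule
   containing (z-w)^2, and conversely every truncation of such an f is a polynomial
   multiple of (z-w)^2.  Hence P_M acts on each f_d separately, subtracting its
   projection onto the span of (1)_i and (i)_i in C^(d+1).  Substituting this into
   C = I - R1 R1^* - R2 R2^* + R1 R2 R1^* R2^* shows that, for g in M, C g depends only
   on the edge coefficients g_(0,d), g_(d,0), which C exchanges and multiplies by 2/d.
   In degree 2 the two edge coefficients of g in M agree, giving the eigenvalue 1 with
   eigenvector (z-w)^2; in degree n+2 the vectors (w^n ± z^n)(z-w)^2 give ±2/(n+2);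
   and the constant 1, which is orthogonal to M, gives 0. *)

Open Scope R_scope.

Definition square_sum (N : nat) (F : nat -> nat -> R) : R :=
  sum_f_R0 (fun i => sum_f_R0 (fun j => F i j) N) N.

Lemma sum_f_R0_mask_min (g : nat -> R) (M N : nat) :
  sum_f_R0 (fun j => if Nat.leb j M then g j else 0) N = sum_f_R0 g (Nat.min N M).
Proof.
  induction N as [|N IH].
  - simpl. destruct (Nat.leb_spec 0 M); [|lia].
    replace (Nat.min 0 M) with 0%nat by lia. reflexivity.
  - rewrite tech5. rewrite IH. destruct (Nat.leb_spec (S N) M).
    + replace (Nat.min (S N) M) with (S N) by lia.
      replace (Nat.min N M) with N by lia. rewrite tech5. reflexivity.
    + replace (Nat.min (S N) M) with M by lia.
      replace (Nat.min N M) with M by lia. ring.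
Qed.

Lemma sum_f_R0_mask (g : nat -> R) (M N : nat) : (M <= N)%nat ->
  sum_f_R0 (fun j => if Nat.leb j M then g j else 0) N = sum_f_R0 g M.
Proof. intros. rewrite sum_f_R0_mask_min. f_equal. lia. Qed.

Definition square_mask (M : nat) (F : nat -> nat -> R) : nat -> nat -> R :=
  fun i j => if andb (Nat.leb i M) (Nat.leb j M) then F i j else 0.

Lemma square_sum_mask (F : nat -> nat -> R) (M N : nat) : (M <= N)%nat ->
  square_sum N (square_mask M F) = square_sum M F.
Proof.
  intros H. unfold square_sum, square_mask.
  rewrite <- (sum_f_R0_mask (fun i => sum_f_R0 (fun j => F i j) M) M N H).
  apply sum_eq. intros i Hi. destruct (Nat.leb i M); simpl.
  - apply sum_f_R0_mask; auto.
  - apply sum_eq_R0; auto.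
Qed.

Lemma square_sum_le (F G : nat -> nat -> R) N : (forall i j, F i j <= G i j) ->
  square_sum N F <= square_sum N G.
Proof. intros H. unfold square_sum. apply sum_Rle; intros. apply sum_Rle; intros. apply H. Qed.

Lemma square_sum_abs (F : nat -> nat ->
  R) N : Rabs (square_sum N F) <= square_sum N (fun i j => Rabs (F i j)).
Proof.
  unfold square_sum. eapply Rle_trans. apply sum_f_R0_triangle.
  apply sum_Rle; intros. apply sum_f_R0_triangle.
Qed.

Lemma square_sum_minus (F G : nat -> nat -> R) N : square_sum N (fun i j => F i j - G i j) =
  square_sum N F - square_sum N G.
Proof.
  unfold square_sum. rewrite <- minus_sum. apply sum_eq; intros. apply minus_sum.
Qed.

Lemma square_sum_plus (F G : nat -> nat -> R) N : square_sum N (fun i j => F i j + G i j) =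
  square_sum N F + square_sum N G.
Proof.
  unfold square_sum. rewrite <- plus_sum. apply sum_eq; intros. apply plus_sum.
Qed.

Lemma square_sum_ext (F G : nat -> nat -> R) N : (forall i j, F i j = G i j) -> square_sum N F =
  square_sum N G.
Proof. intros H. unfold square_sum. apply sum_eq; intros. apply sum_eq; intros. apply H. Qed.

Lemma square_sum_scal (F : nat -> nat -> R) c N : square_sum N (fun i j => c * F i j) =
  c * square_sum N F.
Proof.
  unfold square_sum. rewrite scal_sum. apply sum_eq; intros. rewrite Rmult_comm, scal_sum.
  apply sum_eq; intros. ring.
Qed.

Lemma square_sum_mono (F : nat -> nat -> R) M N : (forall i j, 0 <= F i j) -> (M <= N)%nat ->
  square_sum M F <= square_sum N F.
Proof.
  intros H HMN. rewrite <- (square_sum_mask F M N HMN). apply square_sum_le.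
  intros i j. unfold square_mask. destruct (andb (Nat.leb i M) (Nat.leb j M)); [lra| apply H].
Qed.

Lemma square_sum_transpose (F : nat -> nat -> R) N : square_sum N (fun i j => F j i) =
  square_sum N F.
Proof.
  unfold square_sum. rewrite <- sum_n_Reals.
  rewrite (sum_n_ext _ (fun i => sum_n (fun j => F j i) N)).
  2:{ intros. rewrite sum_n_Reals. reflexivity. }
  rewrite (sum_n_switch (fun i j => F j i)). rewrite sum_n_Reals. apply sum_eq. intros.
  rewrite sum_n_Reals. reflexivity.
Qed.

Lemma sum_f_R0_ge_term (g : nat -> R) k N : (forall i, 0 <= g i) -> (k <= N)%nat ->
  g k <= sum_f_R0 g N.
Proof.
  intros H. induction N; intros Hk.
  - replace k with 0%nat by lia. simpl. lra.
  - destruct (Nat.eq_dec k (S N)). + subst. rewrite tech5. pose proof (cond_pos_sum g N H). lra.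
    + rewrite tech5. specialize (H (S N)). pose proof (IHN ltac:(lia)). lra.
Qed.

Lemma square_sum_ge_term (F : nat -> nat -> R) i j N : (forall i j, 0 <= F i j) -> (i <= N)%nat ->
  (j <= N)%nat ->
  F i j <= square_sum N F.
Proof.
  intros H Hi Hj. unfold square_sum. eapply Rle_trans.
  2:{ apply (sum_f_R0_ge_term (fun i => sum_f_R0 (fun j => F i j) N) i N); auto.
      intros; apply cond_pos_sum; intros; apply H. }
  apply (sum_f_R0_ge_term (fun j => F i j)); auto.
Qed.

Definition bounded_sums (F : nat -> nat -> R) := exists B, forall N, square_sum N F <= B.

Lemma square_sum_ex_lim (F : nat -> nat -> R) : (forall i j, 0 <= F i j) -> bounded_sums F ->
  ex_finite_lim_seq (fun N => square_sum N F).
Proof.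
  intros H [B HB]. apply ex_finite_lim_seq_incr with B; auto.
  intros n. apply square_sum_mono; auto.
Qed.

Lemma square_sum_le_lim (F : nat -> nat -> R) N : (forall i j, 0 <= F i j) -> bounded_sums F ->
  square_sum N F <= real (Lim_seq (fun n => square_sum n F)).
Proof.
  intros H HB. apply (is_lim_seq_incr_compare (fun n => square_sum n F)).
  apply Lim_seq_correct'. apply square_sum_ex_lim; auto.
  intros n. apply square_sum_mono; auto.
Qed.

Lemma square_sum_diff_bound (F G : nat -> nat -> R) M N :
  (forall i j, Rabs (F i j) <= G i j) -> (M <= N)%nat ->
  Rabs (square_sum N F - square_sum M F) <= square_sum N G - square_sum M G.
Proof.
  intros H HMN. rewrite <- (square_sum_mask F M N HMN), <- (square_sum_mask G M N HMN).
  rewrite <- !square_sum_minus. eapply Rle_trans. apply square_sum_abs. apply square_sum_le.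
  intros i j. unfold square_mask. destruct (andb (Nat.leb i M) (Nat.leb j M)).
  - rewrite Rminus_diag, Rabs_R0. lra.
  - rewrite !Rminus_0_r. apply H.
Qed.

Lemma square_sum_ex_lim_dom (F G : nat -> nat -> R) :
  (forall i j, Rabs (F i j) <= G i j) -> bounded_sums G ->
  ex_finite_lim_seq (fun N => square_sum N F).
Proof.
  intros H HB.
  assert (HG0 : forall i j, 0 <= G i j).
  { intros i j. eapply Rle_trans; [apply Rabs_pos|apply H]. }
  assert (Hc := square_sum_ex_lim G HG0 HB). apply ex_lim_seq_cauchy_corr in Hc.
  apply ex_lim_seq_cauchy_corr. intros eps. destruct (Hc eps) as [N0 HN0].
  exists N0. intros n m Hn Hm. destruct (Nat.le_ge_cases m n) as [Hmn|Hmn].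
  - eapply Rle_lt_trans. apply square_sum_diff_bound; eauto.
    specialize (HN0 n m Hn Hm). eapply Rle_lt_trans; [|exact HN0].
    apply Rle_abs.
  - rewrite Rabs_minus_sym. eapply Rle_lt_trans. apply square_sum_diff_bound; eauto.
    specialize (HN0 m n Hm Hn). eapply Rle_lt_trans; [|exact HN0].
    apply Rle_abs.
Qed.

Lemma bounded_sums_lin (F G : nat -> nat -> R) (c d : R) :
  0 <= c -> 0 <= d ->
  bounded_sums F -> bounded_sums G -> bounded_sums (fun i j => c * F i j + d * G i j).
Proof.
  intros Hc Hd [B1 H1] [B2 H2]. exists (c * B1 + d * B2). intros N.
  rewrite square_sum_plus, (square_sum_scal F), (square_sum_scal G). specialize (H1 N).
  specialize (H2 N). nra.
Qed.

Lemma bounded_sums_le (F G : nat -> nat -> R) : (forall i j, F i j <= G i j) -> bounded_sums G ->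
  bounded_sums F.
Proof.
  intros H [B HB]. exists B. intros N. eapply Rle_trans; [apply square_sum_le, H|apply HB].
Qed.

Lemma sum_f_R0_le_S (g : nat -> R) N : (forall i, 0 <= g i) -> sum_f_R0 g N <= sum_f_R0 g (S N).
Proof. intros H. rewrite tech5. specialize (H (S N)). lra. Qed.

Lemma bounded_sums_shift (F : nat -> nat -> R) : (forall i j, 0 <= F i j) -> bounded_sums F ->
  bounded_sums (fun i j => match i with O => 0 | S i' => F i' j end).
Proof.
  intros H0 [B HB]. exists B. intros N. destruct N as [|n].
  - unfold square_sum. simpl. specialize (HB 0%nat). unfold square_sum in HB. simpl in HB.
    pose proof (H0 0%nat 0%nat). lra.
  - unfold square_sum. rewrite decomp_sum by lia. simpl pred.
    rewrite sum_eq_R0, Rplus_0_l by auto. eapply Rle_trans; [|apply (HB (S n))].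
    unfold square_sum. apply sum_f_R0_le_S. intros i. apply cond_pos_sum. intros; apply H0.
Qed.

Lemma bounded_sums_unshift (F : nat -> nat -> R) : (forall i j, 0 <= F i j) -> bounded_sums F ->
  bounded_sums (fun i j => F (S i) j).
Proof.
  intros H0 [B HB]. exists B. intros N. eapply Rle_trans; [|apply (HB (S N))].
  unfold square_sum. rewrite (decomp_sum _ (S N)) by lia. simpl pred.
  assert (0 <= sum_f_R0 (fun j => F 0%nat j) (S N)) by (apply cond_pos_sum; intros; apply H0).
  cut (sum_f_R0 (fun i => sum_f_R0 (fun j => F (S i) j) N) N <=
       sum_f_R0 (fun i => sum_f_R0 (fun j => F (S i) j) (S N)) N); [lra|].
  apply sum_Rle. intros. apply sum_f_R0_le_S. intros; apply H0.
Qed.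

Lemma bounded_sums_transpose (F : nat -> nat -> R) : bounded_sums F ->
  bounded_sums (fun i j => F j i).
Proof. intros [B HB]. exists B. intros N. rewrite square_sum_transpose. apply HB. Qed.

Definition diag_sum (N : nat) (F : nat -> nat -> R) : R :=
  sum_f_R0 (fun d => sum_f_R0 (fun i => F i (d - i)%nat) d) N.

Definition tri_mask (N : nat) (F : nat -> nat -> R) : nat -> nat -> R :=
  fun i j => if Nat.leb (i + j) N then F i j else 0.

Definition row_sum (N : nat) (F : nat -> nat -> R) : R :=
  sum_f_R0 (fun i => sum_f_R0 (fun j => F i j) (N - i)) N.

Lemma row_sum_diag_sum N F : row_sum N F = diag_sum N F.
Proof.
  induction N as [|N IH].
  - reflexivity.
  - unfold row_sum, diag_sum in *. rewrite tech5. rewrite (tech5 _ N).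
    rewrite <- IH.
    simpl (sum_f_R0 _ 0).
    rewrite tech5. replace (S N - S N)%nat with 0%nat by lia.
    transitivity (sum_f_R0 (fun i => sum_f_R0 (fun j => F i j) (N - i)) N +
                  sum_f_R0 (fun i => F i (S N - i)%nat) N + F (S N) 0%nat); [|ring].
    rewrite <- plus_sum. f_equal. apply sum_eq. intros i Hi.
    replace (S N - i)%nat with (S (N - i)) by lia. rewrite tech5. reflexivity.
Qed.

Lemma diag_sum_square N F : diag_sum N F = square_sum N (tri_mask N F).
Proof.
  rewrite <- row_sum_diag_sum. unfold row_sum, square_sum, tri_mask. apply sum_eq. intros i Hi.
  rewrite <- (sum_f_R0_mask (fun j => F i j) (N - i) N) by lia.
  apply sum_eq. intros j Hj.
  destruct (Nat.leb_spec (i+j) N), (Nat.leb_spec j (N - i)); try lia; auto.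
Qed.

Lemma square_sum_le_diag_sum (F : nat -> nat -> R) N : (forall i j, 0 <= F i j) ->
  square_sum N F <= diag_sum (2 * N) F.
Proof.
  intros H. rewrite diag_sum_square. rewrite <- (square_sum_mask F N (2*N)) by lia.
  apply square_sum_le. intros i j. unfold square_mask, tri_mask.
  destruct (Nat.leb_spec i N), (Nat.leb_spec j N), (Nat.leb_spec (i+j) (2*N)); simpl;
    try lia; try lra; apply H.
Qed.

Lemma diag_sum_le_square_sum (F : nat -> nat -> R) N : (forall i j, 0 <= F i j) ->
  diag_sum N F <= square_sum N F.
Proof.
  intros H. rewrite diag_sum_square. apply square_sum_le. intros i j. unfold tri_mask.
  destruct (Nat.leb (i+j) N); [lra|apply H].
Qed.

Lemma square_sum_diag_sum_diff (F G : nat -> nat -> R) N :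
  (forall i j, Rabs (F i j) <= G i j) ->
  Rabs (square_sum N F - diag_sum N F) <= square_sum N G - square_sum (Nat.div2 N) G.
Proof.
  intros H. rewrite diag_sum_square.
  rewrite <- (square_sum_mask G (Nat.div2 N) N) by (apply Nat.div2_decr; lia).
  rewrite <- !square_sum_minus. eapply Rle_trans. apply square_sum_abs. apply square_sum_le.
  intros i j. unfold square_mask, tri_mask.
  pose proof (Nat.div2_odd N) as Hd.
  destruct (Nat.leb_spec (i+j) N); destruct (Nat.leb_spec i (Nat.div2 N));
   destruct (Nat.leb_spec j (Nat.div2 N)); simpl;
   rewrite ?Rminus_diag, ?Rminus_0_r, ?Rabs_R0;
   first [ lra | apply H | (eapply Rle_trans; [apply Rabs_pos|apply H])
         | (exfalso; destruct (Nat.odd N); simpl in Hd; lia) ].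
Qed.

Lemma square_sum_lim0_of_diag_sums (F G : nat -> nat -> R) :
  (forall i j, Rabs (F i j) <= G i j) -> bounded_sums G -> (forall N, diag_sum N F = 0) ->
  is_lim_seq (fun N => square_sum N F) 0.
Proof.
  intros H HB Ht.
  assert (HG0 : forall i j, 0 <= G i j).
  { intros i j. eapply Rle_trans; [apply Rabs_pos|apply H]. }
  assert (Hc := square_sum_ex_lim G HG0 HB). apply ex_lim_seq_cauchy_corr in Hc.
  apply is_lim_seq_Reals. intros eps Heps.
  destruct (Hc (mkposreal eps Heps)) as [N0 HN0]. simpl in HN0.
  exists (2 * N0)%nat. intros n Hn. unfold R_dist. rewrite Rminus_0_r.
  pose proof (square_sum_diag_sum_diff F G n H) as Hd. rewrite Ht, Rminus_0_r in Hd.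
  eapply Rle_lt_trans. apply Hd.
  assert (Hn2 : (N0 <= Nat.div2 n)%nat).
  { pose proof (Nat.div2_odd n). destruct (Nat.odd n); simpl in *; lia. }
  specialize (HN0 n (Nat.div2 n) ltac:(lia) Hn2).
  eapply Rle_lt_trans; [|exact HN0]. apply Rle_abs.
Qed.

Lemma Lim_seq_le_bound (u : nat -> R) (B : R) : ex_finite_lim_seq u -> (forall n, u n <= B) ->
  real (Lim_seq u) <= B.
Proof.
  intros He H. assert (Hl := Lim_seq_correct' u He).
  assert (Hc : is_lim_seq (fun _ : nat => B) B) by apply is_lim_seq_const.
  pose proof (is_lim_seq_le u (fun _ => B) _ _ H Hl Hc). simpl in H0. exact H0.
Qed.

Lemma Lim_seq_minus_real (u v w : nat -> R) : ex_finite_lim_seq u -> ex_finite_lim_seq v ->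
  (forall n, w n = u n - v n) -> real (Lim_seq w) = real (Lim_seq u) - real (Lim_seq v).
Proof.
  intros [lu Hu] [lv Hv] Hw.
  rewrite (is_lim_seq_unique u lu Hu), (is_lim_seq_unique v lv Hv).
  rewrite (Lim_seq_ext w (fun n => u n - v n)) by auto.
  rewrite (is_lim_seq_unique _ _ (is_lim_seq_minus' u v lu lv Hu Hv)). reflexivity.
Qed.

Lemma Rabs_le_all_eps_eq0 (r K : R) : 0 <= K -> (forall eps, 0 < eps -> Rabs r <= K * eps) -> r = 0.
Proof.
  intros HK H. destruct (Req_dec r 0) as [|Hr]; auto. exfalso.
  assert (Ha : 0 < Rabs r) by (apply Rabs_pos_lt; auto).
  specialize (H (Rabs r / (2 * (K + 1))) ltac:(apply Rdiv_lt_0_compat; lra)).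
  assert (K * (Rabs r / (2 * (K + 1))) < Rabs r).
  { unfold Rdiv. rewrite <- Rmult_assoc.
    apply (Rmult_lt_reg_r (2 * (K+1))); [lra|].
    rewrite Rmult_assoc, Rinv_l by lra. nra. }
  lra.
Qed.

Lemma sqrt_lt_of_lt_sqr y eps : 0 <= y -> 0 < eps -> y < eps ^ 2 -> sqrt y < eps.
Proof.
  intros Hy He H. rewrite <- (sqrt_pow2 eps) by lra. apply sqrt_lt_1_alt. lra.
Qed.

Lemma seq2_ext (a b : seq2) : (forall i j, a i j = b i j) -> a = b.
Proof. intros H. do 2 (apply functional_extensionality; intros). apply H. Qed.

Definition Cnorm2 (c : C) : R := fst c ^ 2 + snd c ^ 2.

Lemma Cnorm2_ge0 c : 0 <= Cnorm2 c.
Proof. unfold Cnorm2. nra. Qed.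

Lemma sqsum_square_sum N a : sqsum N a = square_sum N (fun i j => Cnorm2 (a i j)).
Proof.
  unfold sqsum, square_sum. rewrite sum_n_Reals. apply sum_eq. intros i _.
  rewrite sum_n_Reals. apply sum_eq. intros j _. unfold Cmod, Cnorm2.
  rewrite pow2_sqrt; [reflexivity|]. nra.
Qed.

Lemma Re_sum_n (f : nat -> C) N : Re (sum_n f N) = sum_f_R0 (fun i => Re (f i)) N.
Proof.
  induction N.
  - rewrite sum_O. reflexivity.
  - rewrite sum_Sn. simpl sum_f_R0. rewrite <- IHN. reflexivity.
Qed.

Lemma Im_sum_n (f : nat -> C) N : Im (sum_n f N) = sum_f_R0 (fun i => Im (f i)) N.
Proof.
  induction N.
  - rewrite sum_O. reflexivity.
  - rewrite sum_Sn. simpl sum_f_R0. rewrite <- IHN. reflexivity.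
Qed.

Definition ip_re (a b : seq2) i j : R := fst (a i j) * fst (b i j) + snd (a i j) * snd (b i j).

Definition ip_im (a b : seq2) i j : R := snd (a i j) * fst (b i j) - fst (a i j) * snd (b i j).

Lemma Re_psum N a b : Re (ip_psum N a b) = square_sum N (ip_re a b).
Proof.
  unfold ip_psum, square_sum. rewrite Re_sum_n. apply sum_eq. intros i _.
  rewrite Re_sum_n. apply sum_eq. intros j _. unfold ip_re. simpl. ring.
Qed.

Lemma Im_psum N a b : Im (ip_psum N a b) = square_sum N (ip_im a b).
Proof.
  unfold ip_psum, square_sum. rewrite Im_sum_n. apply sum_eq. intros i _.
  rewrite Im_sum_n. apply sum_eq. intros j _. unfold ip_im. simpl. ring.
Qed.

Definition coef_norm2 (a : seq2) : nat -> nat -> R := fun i j => Cnorm2 (a i j).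

Lemma coef_norm2_ge0 a i j : 0 <= coef_norm2 a i j.
Proof. apply Cnorm2_ge0. Qed.

Lemma inH2_bounded_sums a : inH2 a <-> bounded_sums (coef_norm2 a).
Proof.
  unfold inH2, bounded_sums. split; intros [B HB]; exists B; intros N; specialize (HB N);
  rewrite sqsum_square_sum in *; exact HB.
Qed.

Lemma inH2_add a b : inH2 a -> inH2 b -> inH2 (s2add a b).
Proof.
  rewrite !inH2_bounded_sums. intros Ha Hb.
  apply (bounded_sums_le _ (fun i j => 2 * coef_norm2 a i j + 2 * coef_norm2 b i j)).
  - intros i j. unfold coef_norm2, Cnorm2, s2add. simpl.
    pose proof (pow2_ge_0 (fst (a i j) - fst (b i j))).
    pose proof (pow2_ge_0 (snd (a i j) - snd (b i j))). nra.
  - apply bounded_sums_lin; auto; lra.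
Qed.

Lemma inH2_scal c a : inH2 a -> inH2 (s2scal c a).
Proof.
  rewrite !inH2_bounded_sums. intros Ha.
  apply (bounded_sums_le _ (fun i j => Cnorm2 c * coef_norm2 a i j + 0 * coef_norm2 a i j)).
  - intros i j. unfold coef_norm2, Cnorm2, s2scal. simpl. right. ring.
  - apply bounded_sums_lin; auto; try lra. apply Cnorm2_ge0.
Qed.

Lemma inH2_opp a : inH2 a -> inH2 (s2opp a).
Proof.
  rewrite !inH2_bounded_sums. intros Ha. apply (bounded_sums_le _ (coef_norm2 a)); auto.
  intros i j. unfold coef_norm2, Cnorm2, s2opp. simpl. right. ring.
Qed.

Lemma inH2_sub a b : inH2 a -> inH2 b -> inH2 (s2sub a b).
Proof. intros. apply inH2_add; auto. apply inH2_opp; auto. Qed.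

Lemma inH2_Sz a : inH2 a -> inH2 (Sz a).
Proof.
  rewrite !inH2_bounded_sums. intros Ha.
  apply (bounded_sums_le _ (fun i j => match i with O => 0 | S i' => coef_norm2 a i' j end)).
  - intros i j. unfold coef_norm2, Cnorm2, Sz. destruct i; simpl; lra.
  - apply bounded_sums_shift; auto. apply coef_norm2_ge0.
Qed.

Lemma inH2_Szadj a : inH2 a -> inH2 (Szadj a).
Proof.
  rewrite !inH2_bounded_sums. intros Ha.
  apply (bounded_sums_le _ (fun i j => coef_norm2 a (S i) j)).
  - intros i j. unfold coef_norm2, Szadj. lra.
  - apply bounded_sums_unshift; auto. apply coef_norm2_ge0.
Qed.

Lemma inH2_Sw a : inH2 a -> inH2 (Sw a).
Proof.
  rewrite !inH2_bounded_sums. intros Ha.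
  apply (bounded_sums_le _ (fun i j => match j with O => 0 | S j' => coef_norm2 a i j' end)).
  - intros i j. unfold coef_norm2, Cnorm2, Sw. destruct j; simpl; lra.
  - apply (bounded_sums_transpose (fun i j => match i with O => 0 | S i' => coef_norm2 a j i' end)).
    apply (bounded_sums_shift (fun i j => coef_norm2 a j i)); [intros; apply coef_norm2_ge0|].
    apply (bounded_sums_transpose (coef_norm2 a)); auto.
Qed.

Lemma inH2_Swadj a : inH2 a -> inH2 (Swadj a).
Proof.
  rewrite !inH2_bounded_sums. intros Ha.
  apply (bounded_sums_le _ (fun i j => coef_norm2 a i (S j))).
  - intros i j. unfold coef_norm2, Swadj. lra.
  - apply (bounded_sums_transpose (fun i j => coef_norm2 a j (S i))).
    apply (bounded_sums_unshift (fun i j => coef_norm2 a j i)); [intros; apply coef_norm2_ge0|].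
    apply (bounded_sums_transpose (coef_norm2 a)); auto.
Qed.

Lemma ip_re_bound a b i j :
  Rabs (ip_re a b i j) <= (1/2) * coef_norm2 a i j + (1/2) * coef_norm2 b i j.
Proof.
  unfold ip_re, coef_norm2, Cnorm2. apply Rabs_le.
  pose proof (pow2_ge_0 (fst (a i j) - fst (b i j))).
  pose proof (pow2_ge_0 (snd (a i j) - snd (b i j))).
  pose proof (pow2_ge_0 (fst (a i j) + fst (b i j))).
  pose proof (pow2_ge_0 (snd (a i j) + snd (b i j))).
  split; nra.
Qed.

Lemma ip_im_bound a b i j :
  Rabs (ip_im a b i j) <= (1/2) * coef_norm2 a i j + (1/2) * coef_norm2 b i j.
Proof.
  unfold ip_im, coef_norm2, Cnorm2. apply Rabs_le.
  pose proof (pow2_ge_0 (snd (a i j) - fst (b i j))).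
  pose proof (pow2_ge_0 (fst (a i j) + snd (b i j))).
  pose proof (pow2_ge_0 (snd (a i j) + fst (b i j))).
  pose proof (pow2_ge_0 (fst (a i j) - snd (b i j))).
  split; nra.
Qed.

Lemma ip_re_ex_lim a b : inH2 a -> inH2 b -> ex_finite_lim_seq (fun N => square_sum N (ip_re a b)).
Proof.
  rewrite !inH2_bounded_sums. intros Ha Hb. apply (square_sum_ex_lim_dom _ _ (ip_re_bound a b)).
  apply bounded_sums_lin; auto; lra.
Qed.

Lemma Re_ip a b : Re (ip a b) = real (Lim_seq (fun N => square_sum N (ip_re a b))).
Proof. unfold ip. simpl. f_equal. apply Lim_seq_ext. intros. apply Re_psum. Qed.

Lemma Im_ip a b : Im (ip a b) = real (Lim_seq (fun N => square_sum N (ip_im a b))).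
Proof. unfold ip. simpl. f_equal. apply Lim_seq_ext. intros. apply Im_psum. Qed.

Lemma ip_re_diag a : ip_re a a = coef_norm2 a.
Proof.
  do 2 (apply functional_extensionality; intros). unfold ip_re, coef_norm2, Cnorm2. ring.
Qed.

Lemma coef_Cnorm2_le_ip a i j : inH2 a -> Cnorm2 (a i j) <= Re (ip a a).
Proof.
  intros Ha. rewrite Re_ip, ip_re_diag. apply inH2_bounded_sums in Ha.
  eapply Rle_trans. apply (square_sum_ge_term (coef_norm2 a) i j (Nat.max i j)); try lia.
  apply coef_norm2_ge0.
  apply square_sum_le_lim; auto. apply coef_norm2_ge0.
Qed.

Lemma ip_self_eq0 a : inH2 a -> Re (ip a a) = 0 -> a = s2zero.
Proof.
  intros Ha H0. apply seq2_ext. intros i j.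
  pose proof (coef_Cnorm2_le_ip a i j Ha) as H. rewrite H0 in H. unfold Cnorm2 in H.
  destruct (a i j) as [x y]. simpl in H. unfold s2zero, RtoC. f_equal; nra.
Qed.

Lemma Re_ip_sub a b k : inH2 a -> inH2 b -> inH2 k ->
  Re (ip (s2sub a b) k) = Re (ip a k) - Re (ip b k).
Proof.
  intros Ha Hb Hk. rewrite !Re_ip. apply Lim_seq_minus_real; try apply ip_re_ex_lim; auto.
  intros n. rewrite <- square_sum_minus. apply square_sum_ext. intros i j.
  unfold ip_re, s2sub, s2add, s2opp. simpl. ring.
Qed.

Lemma ip_eq0_of_diag_sums a k : inH2 a -> inH2 k ->
  (forall N, diag_sum N (ip_re a k) = 0) -> (forall N, diag_sum N (ip_im a k) = 0) ->
  ip a k = RtoC 0.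
Proof.
  intros Ha Hk H1 H2. apply inH2_bounded_sums in Ha. apply inH2_bounded_sums in Hk.
  assert (Hb : bounded_sums (fun i j => 1 / 2 * coef_norm2 a i j + 1 / 2 * coef_norm2 k i j))
    by (apply bounded_sums_lin; auto; lra).
  assert (L1 := square_sum_lim0_of_diag_sums _ _ (ip_re_bound a k) Hb H1).
  assert (L2 := square_sum_lim0_of_diag_sums _ _ (ip_im_bound a k) Hb H2).
  apply injective_projections.
  - change (Re (ip a k) = 0). rewrite Re_ip. rewrite (is_lim_seq_unique _ _ L1). reflexivity.
  - change (Im (ip a k) = 0). rewrite Im_ip. rewrite (is_lim_seq_unique _ _ L2). reflexivity.
Qed.

Lemma Rabs_fst_le_nrm x i j : inH2 x -> Rabs (fst (x i j)) <= nrm x.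
Proof.
  intros H. unfold nrm. rewrite <- sqrt_Rsqr_abs. apply sqrt_le_1_alt.
  eapply Rle_trans; [|apply (coef_Cnorm2_le_ip x i j H)]. unfold Cnorm2, Rsqr.
  pose proof (pow2_ge_0 (snd (x i j))). nra.
Qed.

Lemma Rabs_snd_le_nrm x i j : inH2 x -> Rabs (snd (x i j)) <= nrm x.
Proof.
  intros H. unfold nrm. rewrite <- sqrt_Rsqr_abs. apply sqrt_le_1_alt.
  eapply Rle_trans; [|apply (coef_Cnorm2_le_ip x i j H)]. unfold Cnorm2, Rsqr.
  pose proof (pow2_ge_0 (fst (x i j))). nra.
Qed.

Open Scope C_scope.

Ltac C_componentwise := apply injective_projections; simpl; field.

Fixpoint csum (f : nat -> C) (n : nat) : C :=
  match n with O => f O | S m => csum f m + f (S m) end.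

Lemma csum_S f n : csum f (S n) = csum f n + f (S n).
Proof. reflexivity. Qed.

Lemma csum_ext f g n : (forall i, (i <= n)%nat -> f i = g i) -> csum f n = csum g n.
Proof.
  induction n; intros H; simpl. apply H; lia. rewrite IHn by (intros; apply H; lia).
  rewrite H by lia. reflexivity.
Qed.

Lemma csum_plus f g n : csum (fun i => f i + g i) n = csum f n + csum g n.
Proof. induction n; simpl. reflexivity. rewrite IHn. ring. Qed.

Lemma csum_minus f g n : csum (fun i => f i - g i) n = csum f n - csum g n.
Proof. induction n; simpl. reflexivity. rewrite IHn. ring. Qed.

Lemma csum_scal c f n : csum (fun i => c * f i) n = c * csum f n.
Proof. induction n; simpl. reflexivity. rewrite IHn. ring. Qed.

Lemma csum_opp g n : csum (fun i => - g i) n = - csum g n.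
Proof. induction n; simpl. reflexivity. rewrite IHn. ring. Qed.

Lemma csum_zero n : csum (fun _ => RtoC 0) n = RtoC 0.
Proof. induction n; simpl. reflexivity. rewrite IHn. ring. Qed.

Lemma csum_first f n : csum f (S n) = f O + csum (fun i => f (S i)) n.
Proof. induction n. simpl. reflexivity. change (csum f (S (S n))) with (csum f (S n) + f (S (S n))).
  rewrite IHn. simpl. ring. Qed.

Lemma csum_const c n : csum (fun _ => c) n = RtoC (INR n + 1) * c.
Proof. induction n. simpl. C_componentwise. rewrite csum_S, IHn, S_INR. C_componentwise. Qed.

Lemma csum_lin1 c n : csum (fun i => RtoC (INR i) * c) n = RtoC (INR n * (INR n + 1) / 2) * c.
Proof. induction n. simpl. C_componentwise. rewrite csum_S, IHn, S_INR. C_componentwise. Qed.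

Lemma csum_lin2 c n : csum (fun i => RtoC (INR i * INR i) * c) n =
   RtoC (INR n * (INR n + 1) * (2 * INR n + 1) / 6) * c.
Proof. induction n. simpl. C_componentwise. rewrite csum_S, IHn, S_INR. C_componentwise. Qed.

Lemma csum_delta (c : nat -> C) i K :
  csum (fun k => c k * (if Nat.eqb i k then RtoC 1 else RtoC 0)) K = if Nat.leb i K then c i else 0.
Proof.
  induction K; simpl.
  - destruct i; simpl; ring.
  - rewrite IHK.
    destruct (Nat.eqb_spec i (S K)), (Nat.leb_spec i K), (Nat.leb_spec i (S K));
      subst; try lia; ring.
Qed.

Lemma csum_csum_weighted (p : nat -> C) n :
  csum (csum p) n = csum (fun l => RtoC (INR n + 1 - INR l) * p l) n.
Proof.
  induction n.
  - simpl. C_componentwise.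
  - rewrite csum_S, IHn. rewrite (csum_S (fun l => _ * p l)).
    rewrite (csum_ext (fun l => RtoC (INR (S n) + 1 - INR l) * p l)
                      (fun l => RtoC (INR n + 1 - INR l) * p l + p l)).
    + rewrite csum_plus. rewrite S_INR. C_componentwise.
    + intros. rewrite S_INR. C_componentwise.
Qed.

Lemma csum_csum_eq0 (p : nat -> C) d : csum p d = 0 -> csum (fun l => RtoC (INR l) * p l) d = 0 ->
  csum (csum p) d = 0.
Proof.
  intros H1 H2. rewrite csum_csum_weighted.
  rewrite (csum_ext _ (fun l => RtoC (INR d + 1) * p l - RtoC (INR l) * p l)) by (intros; C_componentwise).
  rewrite csum_minus, csum_scal, H1, H2. ring.
Qed.

Lemma csum_csum_pred_eq0 (p : nat -> C) e : csum p (S e) = 0 ->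
  csum (fun l => RtoC (INR l) * p l) (S e) = 0 ->
  csum (csum p) e = 0.
Proof.
  intros H1 H2. pose proof (csum_csum_eq0 p (S e) H1 H2) as H. rewrite csum_S, H1 in H.
  rewrite <- H. ring.
Qed.

Lemma csum_csum_tail (p : nat -> C) d :
  csum p d = 0 -> csum (fun l => RtoC (INR l) * p l) d = 0 ->
  forall k, (d <= S k)%nat -> (k <= d)%nat -> csum (csum p) k = 0.
Proof.
  intros H1 H2 k Hk1 Hk2. destruct (Nat.eq_dec k d) as [->|Hne].
  - apply csum_csum_eq0; auto.
  - destruct d as [|e]; [lia|]. replace k with e by lia. apply csum_csum_pred_eq0; auto.
Qed.

Lemma csum_csum_second_diff (p : nat -> C) i :
  (if Nat.leb 2 i then csum (csum p) (i - 2) else 0)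
  - RtoC 2 * (if Nat.leb 1 i then csum (csum p) (i - 1) else 0) + csum (csum p) i = p i.
Proof. destruct i as [|[|k]]; simpl; [ring|ring|]. rewrite Nat.sub_0_r. ring. Qed.

Lemma Re_csum f n : Re (csum f n) = sum_f_R0 (fun i => Re (f i)) n.
Proof. induction n; simpl. reflexivity. rewrite <- IHn. reflexivity. Qed.

Lemma Im_csum f n : Im (csum f n) = sum_f_R0 (fun i => Im (f i)) n.
Proof. induction n; simpl. reflexivity. rewrite <- IHn. reflexivity. Qed.

Lemma Cconj_RtoC r : Cconj (RtoC r) = RtoC r.
Proof. unfold Cconj, RtoC. simpl. f_equal. ring. Qed.

Lemma csum_conj k n : Cconj (csum k n) = csum (fun i => Cconj (k i)) n.
Proof. induction n; simpl. reflexivity. rewrite Cplus_conj, IHn. reflexivity. Qed.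

Lemma csum_conj_lin al be k n :
  csum (fun i => (al + RtoC (INR i) * be) * Cconj (k i)) n =
  al * Cconj (csum k n) + be * Cconj (csum (fun i => RtoC (INR i) * k i) n).
Proof.
  rewrite !csum_conj.
  rewrite (csum_ext (fun i => Cconj (RtoC (INR i) * k i)) (fun i => RtoC (INR i) * Cconj (k i)))
    by (intros; rewrite Cmult_conj, Cconj_RtoC; reflexivity).
  rewrite <- !csum_scal, <- csum_plus. apply csum_ext. intros. ring.
Qed.

Lemma Re_Cmult_RtoC (w : R) (z : C) : Re (RtoC w * z) = (w * Re z)%R.
Proof. destruct z; simpl. ring. Qed.

Lemma Im_Cmult_RtoC (w : R) (z : C) : Im (RtoC w * z) = (w * Im z)%R.
Proof. destruct z; simpl. ring. Qed.

Lemma Re_weighted_csum_bound x (w : nat -> R) (k : nat -> nat) d : inH2 x ->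
  Rabs (Re (csum (fun i => RtoC (w i) * x i (k i)) d)) <= sum_f_R0 (fun i => Rabs (w i)) d * nrm x.
Proof.
  intros H. rewrite Re_csum. eapply Rle_trans. apply sum_f_R0_triangle.
  rewrite Rmult_comm, scal_sum. apply sum_Rle. intros i _. rewrite Re_Cmult_RtoC, Rabs_mult.
  apply Rmult_le_compat_l. apply Rabs_pos. apply Rabs_fst_le_nrm; auto.
Qed.

Lemma Im_weighted_csum_bound x (w : nat -> R) (k : nat -> nat) d : inH2 x ->
  Rabs (Im (csum (fun i => RtoC (w i) * x i (k i)) d)) <= sum_f_R0 (fun i => Rabs (w i)) d * nrm x.
Proof.
  intros H. rewrite Im_csum. eapply Rle_trans. apply sum_f_R0_triangle.
  rewrite Rmult_comm, scal_sum. apply sum_Rle. intros i _. rewrite Im_Cmult_RtoC, Rabs_mult.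
  apply Rmult_le_compat_l. apply Rabs_pos. apply Rabs_snd_le_nrm; auto.
Qed.

Section Submodule.
Variable M : seq2 -> Prop.
Hypothesis HM : submodule M.

Lemma submodule_inH2 f : M f -> inH2 f.
Proof. destruct HM as [H _]. apply H. Qed.

Lemma submodule_zero : M s2zero.
Proof. destruct HM as [_ [H _]]. exact H. Qed.

Lemma submodule_add f g : M f -> M g -> M (s2add f g).
Proof. destruct HM as [_ [_ [H _]]]. apply H. Qed.

Lemma submodule_scal c f : M f -> M (s2scal c f).
Proof. destruct HM as [_ [_ [_ [H _]]]]. apply H. Qed.

Lemma submodule_closed f : inH2 f ->
  (forall eps, 0 < eps -> exists g, M g /\ nrm (s2sub f g) < eps) -> M f.
Proof. destruct HM as [_ [_ [_ [_ [H _]]]]]. apply H. Qed.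

Lemma submodule_Sz f : M f -> M (Sz f).
Proof. destruct HM as [_ [_ [_ [_ [_ [H _]]]]]]. apply H. Qed.

Lemma submodule_Sw f : M f -> M (Sw f).
Proof. destruct HM as [_ [_ [_ [_ [_ [_ H]]]]]]. apply H. Qed.

Lemma submodule_sub f g : M f -> M g -> M (s2sub f g).
Proof.
  intros Hf Hg. replace (s2sub f g) with (s2add f (s2scal (RtoC (-1)) g)).
  - apply submodule_add; auto. apply submodule_scal; auto.
  - apply seq2_ext. intros i j. unfold s2add, s2sub, s2opp, s2scal. C_componentwise.
Qed.

Lemma is_proj_unique h g1 g2 : inH2 h -> is_proj M h g1 -> is_proj M h g2 -> g1 = g2.
Proof.
  intros Hh [Hg1 Ho1] [Hg2 Ho2].
  assert (Hk : M (s2sub g1 g2)) by (apply submodule_sub; auto).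
  assert (E : s2sub g1 g2 = s2sub (s2sub h g2) (s2sub h g1)).
  { apply seq2_ext. intros i j. unfold s2sub, s2add, s2opp. ring. }
  assert (Hkk : Re (ip (s2sub g1 g2) (s2sub g1 g2)) = 0%R).
  { rewrite E at 1. rewrite Re_ip_sub, Ho2, Ho1 by auto using inH2_sub, submodule_inH2.
    simpl. ring. }
  apply ip_self_eq0 in Hkk; [|apply submodule_inH2; auto].
  apply seq2_ext. intros i j. assert (Eij := f_equal (fun a => a i j) Hkk).
  unfold s2sub, s2add, s2opp, s2zero in Eij. simpl in Eij.
  transitivity (g1 i j + - g2 i j + g2 i j); [ring|]. rewrite Eij. ring.
Qed.

Fixpoint s2sum (F : nat -> seq2) (n : nat) : seq2 :=
  match n with O => F O | S m => s2add (s2sum F m) (F (S m)) end.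

Lemma s2sum_eval F n i j : s2sum F n i j = csum (fun k => F k i j) n.
Proof. induction n; simpl. reflexivity. unfold s2add. rewrite IHn. reflexivity. Qed.

Lemma submodule_s2sum F n : (forall k, (k <= n)%nat -> M (F k)) -> M (s2sum F n).
Proof.
  intros H. induction n; simpl; [apply H; lia|].
  apply submodule_add; [apply IHn; intros; apply H | apply H]; lia.
Qed.

Definition iterSz (a : nat) (g : seq2) : seq2 := Nat.iter a Sz g.

Definition iterSw (b : nat) (g : seq2) : seq2 := Nat.iter b Sw g.

Lemma submodule_iterSz a g : M g -> M (iterSz a g).
Proof. intros Hg. induction a; simpl; auto. apply submodule_Sz; auto. Qed.

Lemma submodule_iterSw a g : M g -> M (iterSw a g).
Proof. intros Hg. induction a; simpl; auto. apply submodule_Sw; auto. Qed.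

End Submodule.

Lemma iterSz_eval a g i j : iterSz a g i j = if Nat.leb a i then g (i - a)%nat j else 0.
Proof.
  revert i. induction a; intros i; simpl. rewrite Nat.sub_0_r. reflexivity.
  unfold Sz. destruct i as [|i]. reflexivity. fold (iterSz a g). rewrite IHa. reflexivity.
Qed.

Lemma iterSw_eval b g i j : iterSw b g i j = if Nat.leb b j then g i (j - b)%nat else 0.
Proof.
  revert j. induction b; intros j; simpl. rewrite Nat.sub_0_r. reflexivity.
  unfold Sw. destruct j as [|j]. reflexivity. fold (iterSw b g). rewrite IHb. reflexivity.
Qed.

Lemma inH2_zero : inH2 s2zero.
Proof.
  exists 0. intros N. rewrite sqsum_square_sum. right.
  apply sum_eq_R0. intros. apply sum_eq_R0. intros. unfold Cnorm2, s2zero. simpl. ring.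
Qed.

Lemma inH2_finite_support (f : seq2) (K : nat) :
  (forall i j, (K < i)%nat \/ (K < j)%nat -> f i j = 0) -> inH2 f.
Proof.
  intros H. apply inH2_bounded_sums. exists (square_sum K (coef_norm2 f)). intros N.
  destruct (Nat.le_ge_cases N K).
  - apply square_sum_mono; auto. apply coef_norm2_ge0.
  - rewrite <- (square_sum_mask _ K N) by lia. right. apply square_sum_ext. intros i j.
    unfold square_mask, coef_norm2.
    destruct (Nat.leb_spec i K), (Nat.leb_spec j K); simpl; auto;
    rewrite H by lia; unfold Cnorm2; simpl; ring.
Qed.

Lemma inH2_submodule : submodule inH2.
Proof.
  unfold submodule. repeat split; auto using inH2_zero, inH2_add, inH2_scal, inH2_Sz, inH2_Sw.
Qed.

Lemma gen_submodule_gen q : gen_submodule q q.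
Proof. intros M _ Hq. exact Hq. Qed.

Lemma gen_submodule_submodule q : inH2 q -> submodule (gen_submodule q).
Proof.
  intros Hq. unfold submodule. split; [|split; [|split; [|split; [|split; [|split]]]]].
  - intros f H. apply H; [exact inH2_submodule|exact Hq].
  - intros X HX _. apply submodule_zero; auto.
  - intros f g Hf Hg X HX HqX. apply submodule_add; auto; [apply Hf|apply Hg]; auto.
  - intros c f Hf X HX HqX. apply submodule_scal; auto. apply Hf; auto.
  - intros f Hf Happ X HX HqX. apply submodule_closed; auto. intros eps He.
    destruct (Happ eps He) as [g [Hg Hn]]. exists g. split; auto. apply Hg; auto.
  - intros f Hf X HX HqX. apply submodule_Sz; auto. apply Hf; auto.
  - intros f Hf X HX HqX. apply submodule_Sw; auto. apply Hf; auto.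
Qed.

(** * Functions vanishing to second order on the diagonal *)

(* diag_mass f d and diag_moment f d are the value and the derivative at t = 1 of
   f_d(t, 1) = Σ_i f_(i,d-i) t^i, so Mdiag is the set of square-summable f whose every
   homogeneous component vanishes to second order on z = w. *)

Definition diag_mass (f : seq2) (d : nat) : C := csum (fun i => f i (d - i)%nat) d.

Definition diag_moment (f : seq2) (d : nat) : C := csum (fun i => RtoC (INR i) * f i (d - i)%nat) d.

Definition Mdiag (f : seq2) : Prop := inH2 f /\ forall d, diag_mass f d = 0 /\ diag_moment f d = 0.

Lemma diag_mass_add f g d : diag_mass (s2add f g) d = diag_mass f d + diag_mass g d.
Proof. unfold diag_mass, s2add. apply csum_plus. Qed.

Lemma diag_moment_add f g d : diag_moment (s2add f g) d = diag_moment f d + diag_moment g d.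
Proof. unfold diag_moment, s2add. rewrite <- csum_plus. apply csum_ext; intros. ring. Qed.

Lemma diag_mass_scal c f d : diag_mass (s2scal c f) d = c * diag_mass f d.
Proof. unfold diag_mass, s2scal. apply csum_scal. Qed.

Lemma diag_moment_scal c f d : diag_moment (s2scal c f) d = c * diag_moment f d.
Proof. unfold diag_moment, s2scal. rewrite <- csum_scal. apply csum_ext; intros. ring. Qed.

Lemma diag_mass_opp f d : diag_mass (s2opp f) d = - diag_mass f d.
Proof. unfold diag_mass, s2opp. apply csum_opp. Qed.

Lemma diag_moment_opp f d : diag_moment (s2opp f) d = - diag_moment f d.
Proof. unfold diag_moment, s2opp. rewrite <- csum_opp. apply csum_ext; intros. ring. Qed.

Lemma diag_mass_sub f g d : diag_mass (s2sub f g) d = diag_mass f d - diag_mass g d.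
Proof. unfold s2sub. rewrite diag_mass_add, diag_mass_opp. ring. Qed.

Lemma diag_moment_sub f g d : diag_moment (s2sub f g) d = diag_moment f d - diag_moment g d.
Proof. unfold s2sub. rewrite diag_moment_add, diag_moment_opp. ring. Qed.

Lemma diag_mass_Sz0 f : diag_mass (Sz f) 0 = 0.
Proof. reflexivity. Qed.

Lemma diag_moment_Sz0 f : diag_moment (Sz f) 0 = 0.
Proof. unfold diag_moment. simpl. ring. Qed.

Lemma diag_mass_SzS f e : diag_mass (Sz f) (S e) = diag_mass f e.
Proof. unfold diag_mass. rewrite csum_first. simpl. rewrite Cplus_0_l. reflexivity. Qed.

Lemma diag_moment_SzS f e : diag_moment (Sz f) (S e) = diag_moment f e + diag_mass f e.
Proof.
  unfold diag_moment, diag_mass. rewrite csum_first.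
  change (Sz f 0%nat (S e - 0)%nat) with (RtoC 0).
  rewrite <- csum_plus, Cmult_0_r, Cplus_0_l. apply csum_ext. intros i _.
  change (Sz f (S i) (S e - S i)%nat) with (f i (e - i)%nat). rewrite S_INR. C_componentwise.
Qed.

Lemma diag_mass_Sw0 f : diag_mass (Sw f) 0 = 0.
Proof. reflexivity. Qed.

Lemma diag_moment_Sw0 f : diag_moment (Sw f) 0 = 0.
Proof. unfold diag_moment. simpl. ring. Qed.

Lemma diag_mass_SwS f e : diag_mass (Sw f) (S e) = diag_mass f e.
Proof.
  unfold diag_mass. rewrite csum_S. replace (S e - S e)%nat with 0%nat by lia.
  change (Sw f (S e) 0%nat) with (RtoC 0). rewrite Cplus_0_r.
  apply csum_ext. intros i Hi. replace (S e - i)%nat with (S (e - i)) by lia. reflexivity.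
Qed.

Lemma diag_moment_SwS f e : diag_moment (Sw f) (S e) = diag_moment f e.
Proof.
  unfold diag_moment. rewrite csum_S. replace (S e - S e)%nat with 0%nat by lia.
  change (Sw f (S e) 0%nat) with (RtoC 0). rewrite Cmult_0_r, Cplus_0_r.
  apply csum_ext. intros i Hi. replace (S e - i)%nat with (S (e - i)) by lia. reflexivity.
Qed.

Lemma diag_mass_weighted f d : diag_mass f d = csum (fun i => RtoC 1 * f i (d - i)%nat) d.
Proof. unfold diag_mass. apply csum_ext; intros. ring. Qed.

Lemma vanish_on_closure (P : seq2 -> Prop) (L : seq2 -> C) (K : R) (f : seq2) :
  0 <= K -> inH2 f -> (forall g, P g -> inH2 g /\ L g = 0) ->
  (forall f g, L (s2sub f g) = L f - L g) ->
  (forall x, inH2 x -> Rabs (Re (L x)) <= K * nrm x /\ Rabs (Im (L x)) <= K * nrm x) ->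
  (forall eps, 0 < eps -> exists g, P g /\ nrm (s2sub f g) < eps) -> L f = 0.
Proof.
  intros HK Hf HP Hsub Hb Happ.
  assert (Hx : forall eps, 0 < eps -> Rabs (Re (L f)) <= K * eps /\ Rabs (Im (L f)) <= K * eps).
  { intros eps He. destruct (Happ eps He) as [g [Hg Hn]]. destruct (HP g Hg) as [HgH HLg].
    assert (E : L f = L (s2sub f g)) by (rewrite Hsub, HLg; ring).
    rewrite E. destruct (Hb (s2sub f g)) as [H1 H2]; [apply inH2_sub; auto|].
    split; eapply Rle_trans; eauto; apply Rmult_le_compat_l; lra. }
  apply injective_projections; simpl; eapply Rabs_le_all_eps_eq0; eauto; intros; apply Hx; auto.
Qed.

Lemma Mdiag_closed f : inH2 f ->
  (forall eps, 0 < eps -> exists g, Mdiag g /\ nrm (s2sub f g) < eps) -> Mdiag f.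
Proof.
  intros Hf Happ. split; auto. intros d. split.
  - apply (vanish_on_closure Mdiag (fun x => diag_mass x d) (sum_f_R0 (fun i => Rabs 1) d)); auto.
    + apply cond_pos_sum. intros; apply Rabs_pos.
    + intros g [Hg Ag]. split; [exact Hg|apply Ag].
    + intros. apply diag_mass_sub.
    + intros x Hx. rewrite diag_mass_weighted.
      split; [apply Re_weighted_csum_bound|apply Im_weighted_csum_bound]; auto.
  - apply (vanish_on_closure Mdiag (fun x => diag_moment x d)
             (sum_f_R0 (fun i => Rabs (INR i)) d)); auto.
    + apply cond_pos_sum. intros; apply Rabs_pos.
    + intros g [Hg Ag]. split; [exact Hg|apply Ag].
    + intros. apply diag_moment_sub.
    + intros x Hx. unfold diag_moment.
      split; [apply Re_weighted_csum_bound|apply Im_weighted_csum_bound]; auto.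
Qed.

Lemma Mdiag_submodule : submodule Mdiag.
Proof.
  unfold submodule. split; [|split; [|split; [|split; [|split; [|split]]]]].
  - intros f [H _]; exact H.
  - split. apply inH2_zero. intros d. unfold diag_mass, diag_moment, s2zero. rewrite csum_zero.
    split; auto.
    rewrite (csum_ext _ (fun _ => RtoC 0)) by (intros; ring). apply csum_zero.
  - intros f g [Hf Af] [Hg Ag]. split. apply inH2_add; auto. intros d.
    rewrite diag_mass_add, diag_moment_add. destruct (Af d) as [-> ->]. destruct (Ag d) as [-> ->].
    split; ring.
  - intros c f [Hf Af]. split. apply inH2_scal; auto. intros d.
    rewrite diag_mass_scal, diag_moment_scal. destruct (Af d) as [-> ->]. split; ring.
  - apply Mdiag_closed.
  - intros f [Hf Af]. split. apply inH2_Sz; auto. intros [|e].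
    rewrite diag_mass_Sz0, diag_moment_Sz0; auto. rewrite diag_mass_SzS, diag_moment_SzS.
    destruct (Af e) as [-> ->]. split; ring.
  - intros f [Hf Af]. split. apply inH2_Sw; auto. intros [|e].
    rewrite diag_mass_Sw0, diag_moment_Sw0; auto. rewrite diag_mass_SwS, diag_moment_SwS.
    destruct (Af e) as [-> ->]. split; ring.
Qed.

Lemma zmw2_off_deg2 i j : (i + j <> 2)%nat -> zmw2 i j = 0.
Proof.
  intros H. destruct i as [|[|[|i]]]; destruct j as [|[|[|j]]]; simpl in *; try reflexivity; lia.
Qed.

Lemma Mdiag_zmw2 : Mdiag zmw2.
Proof.
  split.
  - apply (inH2_finite_support _ 2). intros i j Hij. apply zmw2_off_deg2. lia.
  - intros d. destruct (Nat.eq_dec d 2) as [->|Hd].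
    + unfold diag_mass, diag_moment. simpl. split; C_componentwise.
    + unfold diag_mass, diag_moment. split.
      * rewrite (csum_ext _ (fun _ => RtoC 0)). apply csum_zero. intros. apply zmw2_off_deg2. lia.
      * rewrite (csum_ext _ (fun _ => RtoC 0)). apply csum_zero. intros.
        rewrite zmw2_off_deg2 by lia. ring.
Qed.

(** * Mdiag is the submodule generated by (z - w)^2 *)

Definition Mset : seq2 -> Prop := gen_submodule zmw2.

Lemma Mset_Mdiag f : Mset f -> Mdiag f.
Proof. intros H. apply H. apply Mdiag_submodule. apply Mdiag_zmw2. Qed.

Definition s2one : seq2 := fun i j => if andb (Nat.eqb i 0) (Nat.eqb j 0) then RtoC 1 else RtoC 0.

Definition monomial (a b : nat) : seq2 := iterSz a (iterSw b s2one).

Lemma monomial_eval a b i j : monomial a b i j =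
  (if Nat.eqb i a then RtoC 1 else RtoC 0) * (if Nat.eqb j b then RtoC 1 else RtoC 0).
Proof.
  unfold monomial. rewrite iterSz_eval. destruct (Nat.leb_spec a i).
  - rewrite iterSw_eval. destruct (Nat.leb_spec b j).
    + unfold s2one.
      destruct (Nat.eqb_spec (i - a) 0), (Nat.eqb_spec (j - b) 0),
        (Nat.eqb_spec i a), (Nat.eqb_spec j b);
      simpl; try lia; ring.
    + destruct (Nat.eqb_spec j b); try lia. ring.
  - destruct (Nat.eqb_spec i a); try lia. ring.
Qed.

Definition mul_q (R : seq2) : seq2 :=
  s2add (s2sub (Sz (Sz R)) (s2scal (RtoC 2) (Sz (Sw R)))) (Sw (Sw R)).

Lemma mul_q_eval R i j : mul_q R i j =
  (if Nat.leb 2 i then R (i - 2)%nat j else 0)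
  - RtoC 2 * (if andb (Nat.leb 1 i) (Nat.leb 1 j) then R (i - 1)%nat (j - 1)%nat else 0)
  + (if Nat.leb 2 j then R i (j - 2)%nat else 0).
Proof.
  unfold mul_q, s2sub, s2scal, s2add, s2opp, Sz, Sw.
  destruct i as [|[|i]]; destruct j as [|[|j]]; simpl; rewrite ?Nat.sub_0_r; ring.
Qed.

Lemma mul_q_Sz y : mul_q (Sz y) = Sz (mul_q y).
Proof.
  apply seq2_ext. intros i j. unfold mul_q, s2sub, s2scal, s2add, s2opp, Sz, Sw.
  destruct i as [|[|[|i]]]; destruct j as [|[|[|j]]]; ring.
Qed.

Lemma mul_q_Sw y : mul_q (Sw y) = Sw (mul_q y).
Proof.
  apply seq2_ext. intros i j. unfold mul_q, s2sub, s2scal, s2add, s2opp, Sz, Sw.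
  destruct i as [|[|[|i]]]; destruct j as [|[|[|j]]]; ring.
Qed.

Lemma mul_q_one : mul_q s2one = zmw2.
Proof.
  apply seq2_ext. intros i j. unfold mul_q, s2add, s2sub, s2opp, s2scal, Sz, Sw, s2one, zmw2.
  destruct i as [|[|[|i]]]; destruct j as [|[|[|j]]]; simpl; C_componentwise.
Qed.

Lemma mul_q_monomial a b : mul_q (monomial a b) = iterSz a (iterSw b zmw2).
Proof.
  unfold monomial. induction a; simpl.
  - induction b; simpl. apply mul_q_one. rewrite mul_q_Sw, IHb. reflexivity.
  - rewrite mul_q_Sz. fold (iterSz a (iterSw b s2one)). rewrite IHa. reflexivity.
Qed.

Lemma mul_q_add x y : mul_q (s2add x y) = s2add (mul_q x) (mul_q y).
Proof.
  apply seq2_ext. intros i j. unfold mul_q, s2sub, s2scal, s2add, s2opp, Sz, Sw.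
  destruct i as [|[|[|i]]]; destruct j as [|[|[|j]]]; ring.
Qed.

Lemma mul_q_scal c x : mul_q (s2scal c x) = s2scal c (mul_q x).
Proof.
  apply seq2_ext. intros i j. unfold mul_q, s2sub, s2scal, s2add, s2opp, Sz, Sw.
  destruct i as [|[|[|i]]]; destruct j as [|[|[|j]]]; ring.
Qed.

Lemma mul_q_s2sum F n : mul_q (s2sum F n) = s2sum (fun k => mul_q (F k)) n.
Proof. induction n; simpl. reflexivity. rewrite mul_q_add, IHn. reflexivity. Qed.

Lemma monomial_decomp (R : seq2) K : (forall a b, (K < a)%nat \/ (K < b)%nat -> R a b = 0) ->
  R = s2sum (fun a => s2sum (fun b => s2scal (R a b) (monomial a b)) K) K.
Proof.
  intros H. apply seq2_ext. intros i j. rewrite s2sum_eval.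
  rewrite (csum_ext _ (fun a => (if Nat.leb j K then R a j else 0)
                                * (if Nat.eqb i a then RtoC 1 else RtoC 0))).
  - rewrite csum_delta. destruct (Nat.leb_spec j K), (Nat.leb_spec i K); auto; rewrite H; auto; lia.
  - intros a _. rewrite s2sum_eval. unfold s2scal.
    rewrite (csum_ext _ (fun b => ((if Nat.eqb i a then RtoC 1 else RtoC 0) * R a b)
                                  * (if Nat.eqb j b then RtoC 1 else RtoC 0))).
    rewrite csum_delta. destruct (Nat.leb j K); ring.
    intros b _. rewrite monomial_eval. ring.
Qed.

Lemma submodule_mul_q (M : seq2 -> Prop) (R : seq2) K : submodule M -> M zmw2 ->
  (forall a b, (K < a)%nat \/ (K < b)%nat -> R a b = 0) -> M (mul_q R).
Proof.
  intros HM Hq H. rewrite (monomial_decomp R K H), mul_q_s2sum.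
  apply submodule_s2sum; auto. intros a _. rewrite mul_q_s2sum.
  apply submodule_s2sum; auto. intros b _. rewrite mul_q_scal, mul_q_monomial.
  apply submodule_scal, submodule_iterSz, submodule_iterSw; auto.
Qed.

Lemma mul_q_diag_form (G : nat -> nat -> C) i j :
  mul_q (fun a b => G (a + b + 2)%nat a) i j =
  (if Nat.leb 2 i then G (i + j)%nat (i - 2)%nat else 0)
  - RtoC 2 * (if andb (Nat.leb 1 i) (Nat.leb 1 j) then G (i + j)%nat (i - 1)%nat else 0)
  + (if Nat.leb 2 j then G (i + j)%nat i else 0).
Proof.
  rewrite mul_q_eval. cbv beta.
  destruct (Nat.leb_spec 2 i), (Nat.leb_spec 1 i), (Nat.leb_spec 1 j), (Nat.leb_spec 2 j);
    cbn [andb];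
    try replace (i - 2 + j + 2)%nat with (i + j)%nat by lia;
    try replace (i - 1 + (j - 1) + 2)%nat with (i + j)%nat by lia;
    try replace (i + (j - 2) + 2)%nat with (i + j)%nat by lia;
    reflexivity.
Qed.

Definition truncate (D : nat) (f : seq2) : seq2 :=
  fun i j => if Nat.leb (i + j) D then f i j else 0.

(* The quotient of truncate D f by (z-w)^2: in each degree d <= D it is the double
   cumulative sum of the block of f, whose second differences give back the block. *)

Definition quot_q_truncate (D : nat) (f : seq2) : seq2 :=
  fun a b => let d := (a + b + 2)%nat in
    if Nat.leb d D then csum (csum (fun l => f l (d - l)%nat)) a else 0.

Lemma truncate_eq_mul_q D f : Mdiag f -> truncate D f = mul_q (quot_q_truncate D f).
Proof.
  intros [_ Hf]. apply seq2_ext. intros i j. unfold quot_q_truncate.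
  rewrite (mul_q_diag_form
    (fun d a => if Nat.leb d D then csum (csum (fun l => f l (d - l)%nat)) a else 0)).
  cbv beta. unfold truncate. destruct (Nat.leb (i + j) D);
    [|destruct (Nat.leb 2 i), (Nat.leb 1 i && Nat.leb 1 j)%bool, (Nat.leb 2 j); ring].
  set (p := fun l => f l (i + j - l)%nat).
  assert (Htail : forall k, (i + j <= S k)%nat -> (k <= i + j)%nat -> csum (csum p) k = 0).
  { destruct (Hf (i + j)%nat) as [HA HB]. apply csum_csum_tail; assumption. }
  replace (f i j) with (p i) by (unfold p; f_equal; lia).
  rewrite <- csum_csum_second_diff.
  destruct j as [|[|j]]; cbn [Nat.leb]; rewrite ?Bool.andb_false_r, ?Bool.andb_true_r.
  - rewrite (Htail i) by lia. destruct i as [|i]; cbn beta iota; [ring|].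
    replace (S i - 1)%nat with i by lia. rewrite (Htail i) by lia. ring.
  - rewrite (Htail i) by lia. ring.
  - reflexivity.
Qed.

Lemma submodule_truncate (M : seq2 -> Prop) D f : submodule M -> M zmw2 -> Mdiag f ->
  M (truncate D f).
Proof.
  intros HM Hq Hf. rewrite (truncate_eq_mul_q D f Hf). apply (submodule_mul_q M _ D HM Hq).
  intros a b H. unfold quot_q_truncate. destruct (Nat.leb_spec (a + b + 2) D); auto; lia.
Qed.

Open Scope R_scope.

Lemma truncate_approx f : inH2 f -> forall eps, 0 < eps ->
  exists D, nrm (s2sub f (truncate D f)) < eps.
Proof.
  intros Hf eps He.
  set (F := coef_norm2 f).
  assert (HF0 : forall i j, 0 <= F i j) by (intros; apply coef_norm2_ge0).
  assert (HFb : bounded_sums F) by (apply inH2_bounded_sums; auto).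
  destruct (square_sum_ex_lim F HF0 HFb) as [L HL].
  assert (HLim : real (Lim_seq (fun n => square_sum n F)) = L)
    by (rewrite (is_lim_seq_unique _ _ HL); reflexivity).
  apply is_lim_seq_Reals in HL. destruct (HL (eps ^ 2) ltac:(apply pow_lt; lra)) as [N0 HN0].
  exists (2 * N0)%nat.
  set (x := s2sub f (truncate (2 * N0) f)).
  assert (Xe : forall i j, coef_norm2 x i j = if Nat.leb (i + j) (2 * N0) then 0 else F i j).
  { intros i j. unfold x, F, coef_norm2, s2sub, s2add, s2opp, truncate.
    destruct (Nat.leb (i + j) (2 * N0)); unfold Cnorm2; simpl; ring. }
  assert (Hx : bounded_sums (coef_norm2 x)).
  { apply (bounded_sums_le _ F); auto. intros i j. rewrite Xe.
    destruct (Nat.leb (i+j) (2*N0)); [apply HF0|lra]. }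
  assert (Hx0 : forall i j, 0 <= coef_norm2 x i j) by (intros; apply coef_norm2_ge0).
  assert (Hb : forall n, square_sum n (coef_norm2 x) <= L - square_sum N0 F).
  { intros n. set (K := Nat.max n N0).
    apply (Rle_trans _ (square_sum K (coef_norm2 x))). apply square_sum_mono; auto; lia.
    apply (Rle_trans _ (square_sum K (fun i j => F i j - square_mask N0 F i j))).
    - apply square_sum_le. intros i j. rewrite Xe. unfold square_mask.
      destruct (Nat.leb_spec (i + j) (2 * N0)), (Nat.leb_spec i N0), (Nat.leb_spec j N0); simpl;
        try lia; try lra; pose proof (HF0 i j); lra.
    - rewrite square_sum_minus, square_sum_mask by lia. rewrite <- HLim.
      pose proof (square_sum_le_lim F K HF0 HFb). lra. }
  unfold nrm. apply sqrt_lt_of_lt_sqr; auto.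
  - eapply Rle_trans. apply Cnorm2_ge0. apply (coef_Cnorm2_le_ip x 0 0).
    apply inH2_bounded_sums; auto.
  - rewrite Re_ip, ip_re_diag. eapply Rle_lt_trans. apply Lim_seq_le_bound.
    apply square_sum_ex_lim; auto. apply Hb.
    specialize (HN0 N0 ltac:(lia)). unfold R_dist in HN0. rewrite Rabs_minus_sym in HN0.
    pose proof (Rle_abs (L - square_sum N0 F)). lra.
Qed.

Open Scope C_scope.

Lemma Mdiag_Mset f : Mdiag f -> Mset f.
Proof.
  intros Hf M' HM' Hq. apply (submodule_closed M' HM'). apply Hf.
  intros eps He. destruct (truncate_approx f (proj1 Hf) eps He) as [D HD].
  exists (truncate D f). split; auto. apply submodule_truncate; auto.
Qed.

Lemma Mset_submodule : submodule Mset.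
Proof. apply gen_submodule_submodule, Mdiag_zmw2. Qed.

Lemma Mset_zmw2 : Mset zmw2.
Proof. apply gen_submodule_gen. Qed.

(** * The orthogonal projection onto M *)

(* On the block of degree e, the vectors (1)_(i<=e) and (i)_(i<=e) have Gram matrix
   [[e+1, gram01 e]; [gram01 e, gram11 e]] with determinant gram_det e;
   blk_proj e a b is the projection onto their span of any block whose inner products
   with them are a and b.  For e = 0 the second vector vanishes. *)

Definition gram01 (e : nat) : R := (INR e * (INR e + 1) / 2)%R.

Definition gram11 (e : nat) : R := (INR e * (INR e + 1) * (2 * INR e + 1) / 6)%R.

Definition gram_det (e : nat) : R := (INR e * (INR e + 1) ^ 2 * (INR e + 2) / 12)%R.

Definition blk_coef0 (e : nat) (a b : C) : C :=
  match e with
  | O => a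
  | S _ => RtoC (gram11 e / gram_det e) * a - RtoC (gram01 e / gram_det e) * b
  end.

Definition blk_coef1 (e : nat) (a b : C) : C :=
  match e with
  | O => 0
  | S _ => RtoC ((INR e + 1) / gram_det e) * b - RtoC (gram01 e / gram_det e) * a
  end.

Definition blk_proj (e : nat) (a b : C) (i : nat) : C :=
  blk_coef0 e a b + RtoC (INR i) * blk_coef1 e a b.

Definition perp_part (h : seq2) : seq2 :=
  fun i j => blk_proj (i + j) (diag_mass h (i + j)) (diag_moment h (i + j)) i.

Definition M_part (h : seq2) : seq2 := s2sub h (perp_part h).

Lemma perp_part_eval y i j : perp_part y i j =
  blk_proj (i + j) (diag_mass y (i + j)) (diag_moment y (i + j)) i.
Proof. reflexivity. Qed.

Lemma M_part_eval y i j : M_part y i j = y i j - perp_part y i j.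
Proof. reflexivity. Qed.

Definition blk_weight0 (e i : nat) : R :=
  match e with
  | O => 1%R
  | S _ => (gram11 e / gram_det e - INR i * (gram01 e / gram_det e))%R
  end.

Definition blk_weight1 (e i : nat) : R :=
  match e with
  | O => 0%R
  | S _ => (- (gram01 e / gram_det e) + INR i * ((INR e + 1) / gram_det e))%R
  end.

Lemma blk_proj_expand e a b i : blk_proj e a b i =
  RtoC (blk_weight0 e i) * a + RtoC (blk_weight1 e i) * b.
Proof.
  destruct a, b. unfold blk_proj, blk_coef0, blk_coef1, blk_weight0, blk_weight1.
  destruct e; apply injective_projections; simpl; ring.
Qed.

Lemma gram_det_pos e : (1 <= e)%nat -> (0 < gram_det e)%R.
Proof.
  intros H. unfold gram_det. apply le_INR in H. simpl in H. apply Rdiv_lt_0_compat; [|lra].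
  apply Rmult_lt_0_compat; [|lra]. apply Rmult_lt_0_compat; [lra|]. apply pow_lt. lra.
Qed.

Lemma blk_coef_gram (e : nat) (a b : C) : (e = O -> b = RtoC 0) ->
  RtoC (INR e + 1) * blk_coef0 e a b + RtoC (gram01 e) * blk_coef1 e a b = a /\
  RtoC (gram01 e) * blk_coef0 e a b + RtoC (gram11 e) * blk_coef1 e a b = b.
Proof.
  intros Hb. destruct e as [|e].
  - rewrite (Hb eq_refl). unfold blk_coef0, blk_coef1, gram01, gram11. simpl. split; C_componentwise.
  - assert (Hd := gram_det_pos (S e) ltac:(lia)).
    unfold blk_coef0, blk_coef1, gram01, gram11, gram_det in *.
    assert (Hx : (1 <= INR (S e))%R) by (apply (le_INR 1); lia).
    set (x := INR (S e)) in *.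
    split; apply injective_projections; simpl; field; repeat split; try lra.
Qed.

Lemma perp_part_block h d i : (i <= d)%nat -> perp_part h i (d - i)%nat =
  blk_proj d (diag_mass h d) (diag_moment h d) i.
Proof. intros H. unfold perp_part. replace (i + (d - i))%nat with d by lia. reflexivity. Qed.

Lemma diag_moment0 f : diag_moment f 0 = 0.
Proof. unfold diag_moment. simpl. ring. Qed.

Lemma diag_mass_perp_part h d : diag_mass (perp_part h) d = diag_mass h d.
Proof.
  set (a := diag_mass h d). set (b := diag_moment h d).
  unfold diag_mass at 1.
  rewrite (csum_ext _ (fun i => blk_coef0 d a b + RtoC (INR i) * blk_coef1 d a b))
    by (intros; apply perp_part_block; auto).
  rewrite csum_plus, csum_const, csum_lin1.
  destruct (blk_coef_gram d a b) as [H1 _]; [intros ->; apply diag_moment0|].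
  rewrite <- H1 at 3. unfold gram01. reflexivity.
Qed.

Lemma diag_moment_perp_part h d : diag_moment (perp_part h) d = diag_moment h d.
Proof.
  set (a := diag_mass h d). set (b := diag_moment h d).
  unfold diag_moment at 1.
  rewrite (csum_ext _ (fun i => RtoC (INR i) * blk_coef0 d a b
                                + RtoC (INR i * INR i) * blk_coef1 d a b))
    by (intros; rewrite perp_part_block by auto; fold a b; unfold blk_proj;
        rewrite RtoC_mult; ring).
  rewrite csum_plus, csum_lin1, csum_lin2.
  destruct (blk_coef_gram d a b) as [_ H2]; [intros ->; apply diag_moment0|].
  rewrite <- H2 at 3. unfold gram01, gram11. reflexivity.
Qed.

Lemma diag_mass_M_part h d : diag_mass (M_part h) d = 0.
Proof. unfold M_part. rewrite diag_mass_sub, diag_mass_perp_part. ring. Qed.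

Lemma diag_moment_M_part h d : diag_moment (M_part h) d = 0.
Proof. unfold M_part. rewrite diag_moment_sub, diag_moment_perp_part. ring. Qed.

Lemma block_ip_perp_part h k d :
  csum (fun i => perp_part h i (d - i)%nat * Cconj (k i (d - i)%nat)) d =
  blk_coef0 d (diag_mass h d) (diag_moment h d) * Cconj (diag_mass k d)
  + blk_coef1 d (diag_mass h d) (diag_moment h d) * Cconj (diag_moment k d).
Proof.
  rewrite (csum_ext _ (fun i => blk_proj d (diag_mass h d) (diag_moment h d) i
                                * Cconj (k i (d - i)%nat)))
    by (intros; rewrite perp_part_block; auto).
  apply (csum_conj_lin _ _ (fun i => k i (d - i)%nat)).
Qed.

Lemma ip_re_Re a b i j : ip_re a b i j = Re (a i j * Cconj (b i j)).
Proof. unfold ip_re. destruct (a i j), (b i j). simpl. ring. Qed.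

Lemma ip_im_Im a b i j : ip_im a b i j = Im (a i j * Cconj (b i j)).
Proof. unfold ip_im. destruct (a i j), (b i j). simpl. ring. Qed.

Lemma diag_sum_ip_re a b N : diag_sum N (ip_re a b) =
  sum_f_R0 (fun d => Re (csum (fun i => a i (d - i)%nat * Cconj (b i (d - i)%nat)) d)) N.
Proof.
  unfold diag_sum. apply sum_eq. intros d _. rewrite Re_csum. apply sum_eq. intros. apply ip_re_Re.
Qed.

Lemma diag_sum_ip_im a b N : diag_sum N (ip_im a b) =
  sum_f_R0 (fun d => Im (csum (fun i => a i (d - i)%nat * Cconj (b i (d - i)%nat)) d)) N.
Proof.
  unfold diag_sum. apply sum_eq. intros d _. rewrite Im_csum. apply sum_eq. intros. apply ip_im_Im.
Qed.

Lemma perp_part_orth h k : Mdiag k -> forall N, diag_sum N (ip_re (perp_part h) k) = 0%R /\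
  diag_sum N (ip_im (perp_part h) k) = 0%R.
Proof.
  intros [_ Hk] N. rewrite diag_sum_ip_re, diag_sum_ip_im.
  split; apply sum_eq_R0; intros d _; rewrite block_ip_perp_part;
   destruct (Hk d) as [-> ->]; rewrite Cconj_RtoC; simpl; ring.
Qed.

Lemma block_norm_M_part_le h d :
  (sum_f_R0 (fun i => Cnorm2 (M_part h i (d - i)%nat)) d
   <= sum_f_R0 (fun i => Cnorm2 (h i (d - i)%nat)) d)%R.
Proof.
  assert (E : forall i, Cnorm2 (h i (d - i)%nat) =
     (Cnorm2 (M_part h i (d - i)%nat) + Cnorm2 (perp_part h i (d - i)%nat) +
      Re (perp_part h i (d - i)%nat * Cconj (M_part h i (d - i)%nat)) * 2)%R).
  { intros i. unfold M_part, s2sub, s2add, s2opp, Cnorm2.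
    destruct (h i (d-i)%nat), (perp_part h i (d-i)%nat). simpl. ring. }
  rewrite (sum_eq _ _ d (fun i _ => E i)).
  rewrite !plus_sum. rewrite <- scal_sum, <- Re_csum.
  rewrite (block_ip_perp_part h (M_part h) d), diag_mass_M_part, diag_moment_M_part, Cconj_RtoC.
  assert (0 <= sum_f_R0 (fun i => Cnorm2 (perp_part h i (d - i)%nat)) d)%R
    by (apply cond_pos_sum; intros; apply Cnorm2_ge0).
  simpl. lra.
Qed.

Lemma inH2_M_part h : inH2 h -> inH2 (M_part h).
Proof.
  intros Hh. apply inH2_bounded_sums in Hh. destruct Hh as [B HB]. apply inH2_bounded_sums.
  exists B. intros N.
  eapply Rle_trans. apply square_sum_le_diag_sum. apply coef_norm2_ge0.
  eapply Rle_trans.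
  2:{ apply (Rle_trans _ (square_sum (2*N) (coef_norm2 h))); [|apply HB].
      apply diag_sum_le_square_sum. apply coef_norm2_ge0. }
  unfold diag_sum, coef_norm2. apply sum_Rle. intros. apply block_norm_M_part_le.
Qed.

Lemma Mdiag_M_part h : inH2 h -> Mdiag (M_part h).
Proof.
  intros H. split; [apply inH2_M_part; auto|].
  intros d. split; [apply diag_mass_M_part|apply diag_moment_M_part].
Qed.

Lemma sub_M_part h : s2sub h (M_part h) = perp_part h.
Proof. apply seq2_ext. intros i j. unfold M_part, s2sub, s2add, s2opp. ring. Qed.

Lemma inH2_perp_part h : inH2 h -> inH2 (perp_part h).
Proof. intros H. rewrite <- sub_M_part. apply inH2_sub, inH2_M_part; auto. Qed.

Lemma is_proj_M_part h : inH2 h -> is_proj Mset h (M_part h).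
Proof.
  intros Hh. split; [apply Mdiag_Mset, Mdiag_M_part; auto|].
  intros k Hk. rewrite sub_M_part. apply Mset_Mdiag in Hk.
  apply ip_eq0_of_diag_sums; [apply inH2_perp_part; auto|apply Hk|..];
    intros N; apply (perp_part_orth h k Hk N).
Qed.

Lemma proj_Mset_eq h : inH2 h -> proj Mset h = M_part h.
Proof.
  intros Hh. apply (is_proj_unique Mset Mset_submodule h); [auto| |apply is_proj_M_part; auto].
  unfold proj. apply epsilon_spec. exists (M_part h). apply is_proj_M_part; auto.
Qed.

Lemma perp_part_Mdiag f : Mdiag f -> perp_part f = s2zero.
Proof.
  intros [_ H]. apply seq2_ext. intros i j. rewrite perp_part_eval.
  destruct (H (i + j)%nat) as [-> ->].
  rewrite blk_proj_expand. unfold s2zero. ring.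
Qed.

Lemma M_part_Mdiag f : Mdiag f -> M_part f = f.
Proof.
  intros H. apply seq2_ext. intros i j.
  rewrite M_part_eval, (perp_part_Mdiag f H). unfold s2zero. ring.
Qed.

Lemma proj_Mset_id f : Mdiag f -> proj Mset f = f.
Proof. intros H. rewrite proj_Mset_eq by apply H. apply M_part_Mdiag; auto. Qed.

Lemma M_part_scal c f : M_part (s2scal c f) = s2scal c (M_part f).
Proof.
  apply seq2_ext. intros i j. change (s2scal c (M_part f) i j) with (c * M_part f i j).
  rewrite !M_part_eval, !perp_part_eval, diag_mass_scal, diag_moment_scal.
  change (s2scal c f i j) with (c * f i j).
  rewrite !blk_proj_expand. ring.
Qed.

Lemma Mset_proj h : inH2 h -> Mset (proj Mset h).
Proof. intros H. rewrite proj_Mset_eq by auto. apply Mdiag_Mset, Mdiag_M_part; auto. Qed.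

Lemma inH2_s2one : inH2 s2one.
Proof.
  apply (inH2_finite_support _ 0). intros i j H. unfold s2one.
  destruct (Nat.eqb_spec i 0), (Nat.eqb_spec j 0); simpl; auto; lia.
Qed.

Lemma M_part_s2one : M_part s2one = s2zero.
Proof.
  apply seq2_ext. intros i j. rewrite M_part_eval, perp_part_eval.
  destruct (Nat.eq_dec (i + j) 0) as [H0|H0].
  - assert (i = 0%nat) by lia. assert (j = 0%nat) by lia. subst.
    unfold diag_mass, diag_moment, s2one, s2zero. simpl. C_componentwise.
  - assert (HA : diag_mass s2one (i + j) = 0).
    { unfold diag_mass. rewrite (csum_ext _ (fun _ => RtoC 0)); [apply csum_zero|].
      intros k Hk. unfold s2one.
      destruct (Nat.eqb_spec k 0), (Nat.eqb_spec (i + j - k) 0); simpl; auto; lia. }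
    assert (HB : diag_moment s2one (i + j) = 0).
    { unfold diag_moment. rewrite (csum_ext _ (fun _ => RtoC 0)); [apply csum_zero|].
      intros k Hk. unfold s2one.
      destruct (Nat.eqb_spec k 0), (Nat.eqb_spec (i + j - k) 0); simpl; try lia; ring. }
    rewrite HA, HB, blk_proj_expand. unfold s2one, s2zero.
    destruct (Nat.eqb_spec i 0), (Nat.eqb_spec j 0); simpl; try lia; ring.
Qed.

(** * The core operator of M *)

Lemma diag_mass_Szadj g e : diag_mass (Szadj g) e = diag_mass g (S e) - g 0%nat (S e).
Proof.
  unfold diag_mass. rewrite (csum_first (fun i => g i (S e - i)%nat)). unfold Szadj. simpl. ring.
Qed.

Lemma diag_moment_Szadj g e : diag_moment (Szadj g) e =
  diag_moment g (S e) - diag_mass g (S e) + g 0%nat (S e).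
Proof.
  unfold diag_moment, diag_mass. rewrite !csum_first. cbv beta. rewrite !Nat.sub_0_r.
  assert (E : csum (fun i => RtoC (INR (S i)) * g (S i) (S e - S i)%nat) e =
    csum (fun i => RtoC (INR i) * Szadj g i (e - i)%nat) e
    + csum (fun i => g (S i) (S e - S i)%nat) e).
  { rewrite <- csum_plus. apply csum_ext. intros i _. unfold Szadj. simpl (S e - S i)%nat.
    rewrite S_INR. C_componentwise. }
  rewrite E. simpl (INR 0). ring.
Qed.

Lemma diag_mass_Swadj g e : diag_mass (Swadj g) e = diag_mass g (S e) - g (S e) 0%nat.
Proof.
  unfold diag_mass. rewrite csum_S. replace (S e - S e)%nat with 0%nat by lia.
  transitivity (csum (fun i => g i (S e - i)%nat) e). 2: ring.
  apply csum_ext. intros i Hi. unfold Swadj. f_equal. lia.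
Qed.

Lemma diag_moment_Swadj g e : diag_moment (Swadj g) e =
  diag_moment g (S e) - RtoC (INR (S e)) * g (S e) 0%nat.
Proof.
  unfold diag_moment. rewrite csum_S. replace (S e - S e)%nat with 0%nat by lia.
  transitivity (csum (fun i => RtoC (INR i) * g i (S e - i)%nat) e). 2: ring.
  apply csum_ext. intros i Hi. unfold Swadj. f_equal. f_equal. lia.
Qed.

Definition coreM (g : seq2) : seq2 := core_on_M Mset g.

Definition M_part_Swadj_edge (g : seq2) (e : nat) : C :=
  g 0%nat (S (S e))
  - blk_proj (S e) (- g (S (S e)) 0%nat) (- (RtoC (INR (S (S e))) * g (S (S e)) 0%nat)) 0.

(* The value of coreM g at (i, j) for g in M, obtained by substituting the blockwise
   projection into core_on_M; it involves g only through its edge coefficients. *)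

Definition core_coef (g : seq2) (i j : nat) : C :=
  match i, j with
  | O, O => 0
  | S i', O => blk_proj i' (- g 0%nat (S i')) (g 0%nat (S i')) i'
  | O, S j' => blk_proj j' (- g (S j') 0%nat) (- (RtoC (INR (S j')) * g (S j') 0%nat)) 0
  | S i', S j' => blk_proj (i' + S j') (- g 0%nat (S (i' + S j'))) (g 0%nat (S (i' + S j'))) i'
                  - blk_proj (i' + j') (- M_part_Swadj_edge g (i' + j'))
                      (M_part_Swadj_edge g (i' + j')) i'
  end.

Lemma coreM_coef g : Mdiag g -> forall i j, coreM g i j = core_coef g i j.
Proof.
  intros Hg i j. destruct Hg as [HgH HgA].
  assert (H1 : inH2 (Szadj g)) by (apply inH2_Szadj; auto).
  assert (H2 : inH2 (Swadj g)) by (apply inH2_Swadj; auto).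
  assert (H3 : inH2 (Szadj (M_part (Swadj g)))) by (apply inH2_Szadj, inH2_M_part; auto).
  unfold coreM, core_on_M.
  rewrite (proj_Mset_eq (Szadj g)), (proj_Mset_eq (Swadj g)),
    (proj_Mset_eq (Szadj (M_part (Swadj g)))) by auto.
  cbv [s2add s2sub s2opp Sz Sw].
  destruct i as [|i']; destruct j as [|j']; unfold core_coef.
  - destruct (HgA 0%nat) as [HA _]. unfold diag_mass in HA. simpl in HA. rewrite HA. ring.
  - rewrite M_part_eval, perp_part_eval. rewrite Nat.add_0_l.
    rewrite diag_mass_Swadj, diag_moment_Swadj.
    destruct (HgA (S j')) as [-> ->]. unfold Swadj. rewrite !blk_proj_expand. ring.
  - rewrite M_part_eval, perp_part_eval. rewrite Nat.add_0_r.
    rewrite diag_mass_Szadj, diag_moment_Szadj.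
    destruct (HgA (S i')) as [-> ->]. unfold Szadj. rewrite !blk_proj_expand. ring.
  - rewrite (M_part_eval (Szadj g)), (M_part_eval (Szadj (M_part (Swadj g)))).
    rewrite !perp_part_eval. rewrite !diag_mass_Szadj, !diag_moment_Szadj.
    rewrite diag_mass_M_part, diag_moment_M_part.
    destruct (HgA (S (i' + S j'))) as [-> ->].
    rewrite (M_part_eval (Swadj g) 0%nat). rewrite perp_part_eval. rewrite Nat.add_0_l.
    rewrite diag_mass_Swadj, diag_moment_Swadj. destruct (HgA (S (S (i' + j')))) as [-> ->].
    unfold M_part_Swadj_edge. unfold Szadj, Swadj. rewrite !blk_proj_expand. ring.
Qed.

Lemma core_coef_edge_w g m : core_coef g 0 (S (S m)) = RtoC (2 / INR (S (S m))) * g (S (S m)) 0%nat.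
Proof.
  unfold core_coef. rewrite blk_proj_expand.
  unfold blk_weight0, blk_weight1, gram01, gram11, gram_det.
  assert (Hx : (1 <= INR (S m))%R) by (apply (le_INR 1); lia).
  rewrite (S_INR (S m)). set (x := INR (S m)) in *. destruct (g (S (S m)) 0%nat).
  apply injective_projections; simpl; field; repeat split; lra.
Qed.

Lemma core_coef_edge_z g m : core_coef g (S (S m)) 0 = RtoC (2 / INR (S (S m))) * g 0%nat (S (S m)).
Proof.
  unfold core_coef. rewrite blk_proj_expand.
  unfold blk_weight0, blk_weight1, gram01, gram11, gram_det.
  assert (Hx : (1 <= INR (S m))%R) by (apply (le_INR 1); lia).
  rewrite (S_INR (S m)). set (x := INR (S m)) in *. destruct (g 0%nat (S (S m))).
  apply injective_projections; simpl; field; repeat split; lra.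
Qed.

Lemma core_coef_eq0 (g : seq2) i j : g 0%nat (i + j)%nat = 0 -> g (i + j)%nat 0%nat = 0 ->
  core_coef g i j = 0.
Proof.
  intros H0 H1. destruct i as [|i']; destruct j as [|j']; unfold core_coef; try reflexivity.
  - simpl in H1. rewrite H1. rewrite blk_proj_expand. ring.
  - rewrite Nat.add_0_r in H0. rewrite H0. rewrite blk_proj_expand. ring.
  - unfold M_part_Swadj_edge. replace (S (i' + S j')) with (S i' + S j')%nat by lia.
    replace (S (S (i' + j'))) with (S i' + S j')%nat by lia. rewrite H0, H1.
    rewrite !blk_proj_expand. ring.
Qed.

Lemma core_coef_lin c a b i j : core_coef (s2add (s2scal c a) b) i j =
  c * core_coef a i j + core_coef b i j.
Proof.
  destruct i as [|i']; destruct j as [|j'];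
    unfold core_coef, M_part_Swadj_edge, s2add, s2scal; rewrite ?blk_proj_expand; ring.
Qed.

Lemma Mset_coreM g : Mset g -> Mset (coreM g).
Proof.
  intros Hg. assert (HgH : inH2 g) by (apply Mset_Mdiag in Hg; apply Hg).
  pose proof Mset_submodule as HM.
  unfold coreM, core_on_M. apply submodule_add; auto. apply submodule_sub; auto.
  apply submodule_sub; auto.
  - apply submodule_Sz; auto. apply Mset_proj. apply inH2_Szadj; auto.
  - apply submodule_Sw; auto. apply Mset_proj. apply inH2_Swadj; auto.
  - apply submodule_Sz; auto. apply submodule_Sw; auto. apply Mset_proj. apply inH2_Szadj.
    apply (submodule_inH2 Mset HM). apply Mset_proj. apply inH2_Swadj; auto.
Qed.

Lemma coreM_zero : coreM s2zero = s2zero.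
Proof.
  apply seq2_ext. intros i j. rewrite coreM_coef; [apply core_coef_eq0; reflexivity|].
  apply submodule_zero, Mdiag_submodule.
Qed.

(** * The eigenvalues of the core operator *)

Lemma Cmult_cancel_r (lam c z : C) : lam * z = c * z -> z <> 0 -> lam = c.
Proof.
  intros H Hz. transitivity (lam * z / z). field; auto. rewrite H. field; auto.
Qed.

Lemma Cmult_eq0_r (lam z : C) : lam * z = 0 -> lam <> 0 -> z = 0.
Proof.
  intros H Hl. transitivity (/ lam * (lam * z)). field; auto. rewrite H. ring.
Qed.

Lemma RtoC_neq0 (r : R) : r <> 0%R -> RtoC r <> 0.
Proof. intros H E. apply H. apply (f_equal fst) in E. simpl in E. exact E. Qed.

Lemma INR_SS n : INR (S (S n)) = (INR n + 2)%R.
Proof. rewrite !S_INR. ring. Qed.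

Lemma Cmult_swap_cases (lam c x y : C) :
  lam * x = c * y -> lam * y = c * x -> (x <> 0 \/ y <> 0) -> lam = c \/ lam = - c.
Proof.
  intros Hx Hy Hxy. destruct (Classical_Prop.classic (x + y = 0)) as [Hs|Hs].
  - right. assert (Hd : x - y <> 0).
    { intros H0. destruct Hxy as [H1|H1]; apply H1.
      - transitivity ((x + y + (x - y)) / 2); [field|]. rewrite Hs, H0. field.
      - transitivity ((x + y - (x - y)) / 2); [field|]. rewrite Hs, H0. field. }
    apply (Cmult_cancel_r lam (- c) (x - y)); auto.
    transitivity (lam * x - lam * y); [ring|]. rewrite Hx, Hy. ring.
  - left. apply (Cmult_cancel_r lam c (x + y)); auto.
    transitivity (lam * x + lam * y); [ring|]. rewrite Hx, Hy. ring.
Qed.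

Lemma seq2_neq0 g : g <> s2zero -> exists i j, g i j <> 0.
Proof.
  intros Hg. apply Classical_Prop.NNPP. intros Hno. apply Hg, seq2_ext. intros i j.
  apply Classical_Prop.NNPP. intros Hij. apply Hno. exists i, j. exact Hij.
Qed.

Lemma Mdiag_edges_low g d : Mdiag g -> (d <= 1)%nat -> g 0%nat d = 0 /\ g d 0%nat = 0.
Proof.
  intros [_ Hg] Hd. destruct d as [|[|d]]; [|destruct (Hg 1%nat) as [HA HB]|lia].
  - destruct (Hg 0%nat) as [HA _]. unfold diag_mass in HA. simpl in HA. auto.
  - unfold diag_mass, diag_moment in HA, HB. simpl in HA, HB.
    assert (E1 : g 1%nat 0%nat = 0).
    { transitivity (RtoC (INR 0) * g 0%nat 1%nat + RtoC (INR 1) * g 1%nat 0%nat);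
        [simpl; ring|exact HB]. }
    split; [|exact E1].
    transitivity (g 0%nat 1%nat + g 1%nat 0%nat); [rewrite E1; ring|exact HA].
Qed.

Lemma Mdiag_edges_deg2 g : Mdiag g -> g 0%nat 2%nat = g 2%nat 0%nat.
Proof.
  intros [_ Hg]. destruct (Hg 2%nat) as [HA HB].
  assert (E : g 0%nat 2%nat - g 2%nat 0%nat = diag_mass g 2 - diag_moment g 2).
  { unfold diag_mass, diag_moment. simpl.
    destruct (g 0%nat 2%nat), (g 1%nat 1%nat), (g 2%nat 0%nat).
    apply injective_projections; simpl; ring. }
  rewrite HA, HB in E. transitivity (g 0%nat 2%nat - g 2%nat 0%nat + g 2%nat 0%nat); [ring|].
  rewrite E. ring.
Qed.

Lemma core_op_eigvec_M_part (lam : C) f : inH2 f -> f <> s2zero ->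
  core_op Mset f = s2scal lam f -> lam <> 0 ->
  Mdiag (M_part f) /\ M_part f <> s2zero /\
  forall i j, core_coef (M_part f) i j = lam * M_part f i j.
Proof.
  intros Hf Hne Heq Hl. unfold core_op in Heq. rewrite proj_Mset_eq in Heq by auto.
  set (g := M_part f) in *. change (coreM g = s2scal lam f) in Heq.
  assert (Hg : Mdiag g) by (apply Mdiag_M_part; auto).
  assert (HC : coreM g = s2scal lam g).
  { rewrite <- (M_part_Mdiag (coreM g)) by (apply Mset_Mdiag, Mset_coreM, Mdiag_Mset; auto).
    rewrite Heq. apply M_part_scal. }
  split; [exact Hg|split].
  - intros Hg0. apply Hne, seq2_ext. intros i j. apply (Cmult_eq0_r lam); auto.
    change (s2scal lam f i j = 0). rewrite <- Heq, HC, Hg0. unfold s2scal, s2zero. ring.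
  - intros i j. rewrite <- coreM_coef, HC by auto. reflexivity.
Qed.

Lemma core_coef_eigvec_edge (lam : C) g i j : lam <> 0 ->
  (forall i j, core_coef g i j = lam * g i j) -> g i j <> 0 ->
  g 0%nat (i + j)%nat <> 0 \/ g (i + j)%nat 0%nat <> 0.
Proof.
  intros Hl Hpt Hij.
  destruct (Classical_Prop.classic (g 0%nat (i + j)%nat = 0)) as [H0|H0]; [|left; exact H0].
  destruct (Classical_Prop.classic (g (i + j)%nat 0%nat = 0)) as [H1|H1]; [|right; exact H1].
  exfalso. apply Hij, (Cmult_eq0_r lam); auto. rewrite <- Hpt. apply core_coef_eq0; auto.
Qed.

Lemma eigenvalue_coreM_cases lam : eigenvalue (core_op Mset) lam ->
  lam = RtoC 0 \/ lam = RtoC 1 \/ exists n : nat, (1 <= n)%nat /\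
        (lam = RtoC (2 / (INR n + 2)) \/ lam = RtoC (- (2 / (INR n + 2)))).
Proof.
  intros [f [Hf [Hne Heq]]].
  destruct (Classical_Prop.classic (lam = RtoC 0)) as [->|Hl]; [left; reflexivity|right].
  destruct (core_op_eigvec_M_part lam f Hf Hne Heq Hl) as [Hg [Hg0 Hpt]].
  set (g := M_part f) in *.
  destruct (seq2_neq0 g Hg0) as [i [j Hij]].
  assert (Hend := core_coef_eigvec_edge lam g i j Hl Hpt Hij).
  set (d := (i + j)%nat) in Hend.
  destruct (Compare_dec.le_lt_dec d 1) as [Hd|Hd].
  { exfalso. destruct (Mdiag_edges_low g d Hg Hd). tauto. }
  destruct d as [|[|m]]; [lia|lia|].
  assert (Q0 := Hpt 0%nat (S (S m))). rewrite core_coef_edge_w in Q0.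
  assert (Q1 := Hpt (S (S m)) 0%nat). rewrite core_coef_edge_z in Q1.
  destruct m as [|n].
  - left. rewrite (Mdiag_edges_deg2 g Hg) in Q0, Hend.
    replace (RtoC 1) with (RtoC (2 / INR 2)) by (f_equal; simpl; field).
    apply (Cmult_cancel_r _ _ _ (eq_sym Q0)). destruct Hend; assumption.
  - right. exists (S n). split; [lia|]. rewrite INR_SS in Q0, Q1. rewrite RtoC_opp.
    apply (Cmult_swap_cases _ _ _ _ (eq_sym Q0) (eq_sym Q1) Hend).
Qed.

Lemma core_coef_edge_scal (g h : seq2) (c : C) i j :
  g 0%nat (i + j)%nat = c * h 0%nat (i + j)%nat ->
  g (i + j)%nat 0%nat = c * h (i + j)%nat 0%nat ->
  core_coef g i j = c * core_coef h i j.
Proof.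
  intros H0 H1. set (r := s2add (s2scal (- c) h) g).
  replace g with (s2add (s2scal c h) r)
    by (apply seq2_ext; intros a b; unfold r, s2add, s2scal; ring).
  rewrite core_coef_lin, (core_coef_eq0 r); [ring| |];
    unfold r, s2add, s2scal; [rewrite H0|rewrite H1]; ring.
Qed.

Lemma eigenvalue_of_edge_eigvec m (g0 : seq2) (lam : C) : Mset g0 ->
  (forall i j, (i + j <> S (S m))%nat -> g0 i j = 0) ->
  lam * g0 0%nat (S (S m)) = RtoC (2 / INR (S (S m))) * g0 (S (S m)) 0%nat ->
  lam * g0 (S (S m)) 0%nat = RtoC (2 / INR (S (S m))) * g0 0%nat (S (S m)) ->
  (g0 0%nat (S (S m)) <> 0 \/ g0 (S (S m)) 0%nat <> 0) ->
  eigenvalue (core_op Mset) lam.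
Proof.
  intros HM Hsupp E0 E1 Hnz.
  assert (Hc : RtoC (2 / INR (S (S m))) <> 0).
  { apply RtoC_neq0, Rgt_not_eq, Rdiv_lt_0_compat; [lra|apply lt_0_INR; lia]. }
  assert (Hg0 : Mdiag g0) by (apply Mset_Mdiag; auto).
  assert (Hf : Mdiag (coreM g0)) by (apply Mset_Mdiag, Mset_coreM; auto).
  assert (Hfv : forall i j, coreM g0 i j = core_coef g0 i j) by (intros; apply coreM_coef; auto).
  assert (Hedge : forall d,
    coreM g0 0%nat d = lam * g0 0%nat d /\ coreM g0 d 0%nat = lam * g0 d 0%nat).
  { intros d. rewrite !Hfv. destruct (Nat.eq_dec d (S (S m))) as [->|Hd].
    - rewrite core_coef_edge_w, core_coef_edge_z. split; symmetry; assumption.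
    - split; rewrite Hsupp by lia; rewrite core_coef_eq0; try ring; apply Hsupp; lia. }
  exists (coreM g0). split; [apply Hf|split].
  - intros Hz. destruct Hnz as [H|H]; apply H; apply (fun E => Cmult_eq0_r _ _ E Hc).
    + rewrite <- core_coef_edge_z, <- Hfv, Hz. reflexivity.
    + rewrite <- core_coef_edge_w, <- Hfv, Hz. reflexivity.
  - unfold core_op. rewrite proj_Mset_id by auto.
    change (coreM (coreM g0) = s2scal lam (coreM g0)).
    apply seq2_ext. intros i j. rewrite coreM_coef by auto. unfold s2scal. rewrite Hfv.
    apply core_coef_edge_scal; apply Hedge.
Qed.

Lemma eigenvalue_coreM_1 : eigenvalue (core_op Mset) (RtoC 1).
Proof.
  apply (eigenvalue_of_edge_eigvec 0 zmw2).
  - apply Mset_zmw2.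
  - intros i j H. apply zmw2_off_deg2. auto.
  - simpl. C_componentwise.
  - simpl. C_componentwise.
  - left. simpl. apply RtoC_neq0. lra.
Qed.

Lemma eigenvalue_coreM_pm n (s : C) : (1 <= n)%nat -> s * s = 1 ->
  eigenvalue (core_op Mset) (s * RtoC (2 / (INR n + 2))).
Proof.
  intros Hn Hs.
  set (g0 := s2add (iterSw n zmw2) (s2scal s (iterSz n zmw2))).
  assert (Gv : forall i j, g0 i j = (if Nat.leb n j then zmw2 i (j - n)%nat else 0) +
                                   s * (if Nat.leb n i then zmw2 (i - n)%nat j else 0)).
  { intros. unfold g0, s2add, s2scal. rewrite iterSw_eval, iterSz_eval. reflexivity. }
  assert (A0 : g0 0%nat (S (S n)) = 1).
  { rewrite Gv. destruct (Nat.leb_spec n (S (S n))); try lia. destruct (Nat.leb_spec n 0); try lia.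
    replace (S (S n) - n)%nat with 2%nat by lia. simpl. ring. }
  assert (A1 : g0 (S (S n)) 0%nat = s).
  { rewrite Gv. destruct (Nat.leb_spec n 0); try lia. destruct (Nat.leb_spec n (S (S n))); try lia.
    replace (S (S n) - n)%nat with 2%nat by lia. simpl. ring. }
  replace (RtoC (2 / (INR n + 2))) with (RtoC (2 / INR (S (S n)))) by (rewrite INR_SS; reflexivity).
  apply (eigenvalue_of_edge_eigvec n g0).
  - unfold g0. pose proof Mset_submodule as HM. apply submodule_add; auto.
    apply submodule_iterSw; auto. apply Mset_zmw2. apply submodule_scal; auto.
    apply submodule_iterSz; auto. apply Mset_zmw2.
  - intros i j H. rewrite Gv. destruct (Nat.leb_spec n j), (Nat.leb_spec n i);
      rewrite ?zmw2_off_deg2 by lia; ring.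
  - rewrite A0, A1. ring.
  - rewrite A0, A1. transitivity (RtoC (2 / INR (S (S n))) * (s * s)). ring. rewrite Hs. ring.
  - left. rewrite A0. apply RtoC_neq0. lra.
Qed.

Lemma eigenvalue_coreM_0 : eigenvalue (core_op Mset) (RtoC 0).
Proof.
  exists s2one. split; [exact inH2_s2one|split].
  - intros H. apply (f_equal (fun f => fst (f 0%nat 0%nat))) in H.
    unfold s2one, s2zero in H. simpl in H. lra.
  - unfold core_op. rewrite proj_Mset_eq, M_part_s2one by exact inH2_s2one.
    change (coreM s2zero = s2scal 0 s2one). rewrite coreM_zero.
    apply seq2_ext. intros i j. unfold s2scal, s2zero. ring.
Qed.

Lemma eigenvalue_coreM_iff lam : eigenvalue (core_op Mset) lam <->
  (lam = RtoC 0 \/ lam = RtoC 1 \/ exists n : nat, (1 <= n)%nat /\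
     (lam = RtoC (2 / (INR n + 2)) \/ lam = RtoC (- (2 / (INR n + 2))))).
Proof.
  split; [apply eigenvalue_coreM_cases|].
  intros [-> | [-> | [n [Hn [-> | ->]]]]].
  - apply eigenvalue_coreM_0.
  - apply eigenvalue_coreM_1.
  - rewrite <- (Cmult_1_l (RtoC _)). apply eigenvalue_coreM_pm; auto. ring.
  - replace (RtoC (- (2 / (INR n + 2)))) with (RtoC (-1) * RtoC (2 / (INR n + 2)))
      by (rewrite RtoC_opp; ring).
    apply eigenvalue_coreM_pm; auto. C_componentwise.
Qed.

Close Scope C_scope.

Lemma two_div_bounds n : (1 <= n)%nat -> 0 < 2 / (INR n + 2) <= 2 / 3.
Proof.
  intros Hn. apply le_INR in Hn. simpl in Hn. split.
  - apply Rdiv_lt_0_compat; lra.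
  - apply Rmult_le_compat_l; [lra|]. apply Rinv_le_contravar; lra.
Qed.

Theorem theorem3p6 :
  (forall lam : C,
     eigenvalue (core_op (gen_submodule zmw2)) lam <->
     (lam = RtoC 0 \/ lam = RtoC 1 \/
      exists n : nat, (1 <= n)%nat /\
        (lam = RtoC (2 / (INR n + 2)) \/ lam = RtoC (- (2 / (INR n + 2))))))
  /\
  (eigenvalue (core_op (gen_submodule zmw2)) (RtoC (2/3)) /\
   forall lam : C, eigenvalue (core_op (gen_submodule zmw2)) lam ->
     lam <> RtoC 1 -> Im lam = 0 /\ Re lam <= 2/3).
Proof.
  change (gen_submodule zmw2) with Mset.
  split; [exact eigenvalue_coreM_iff|split].
  - apply eigenvalue_coreM_iff. right; right. exists 1%nat. split; [lia|left].
    replace (INR 1 + 2) with 3 by (simpl; ring). reflexivity.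
  - intros lam Hl Hl1. apply eigenvalue_coreM_iff in Hl.
    destruct Hl as [-> | [-> | [n [Hn [-> | ->]]]]]; [simpl; lra|congruence| |];
      destruct (two_div_bounds n Hn); simpl; split; lra.
Qed.
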